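(* Let $k$ be a commutative ring over which every finitely generated projective module is free, and let $A$ be a $k$-linear semi-Hopf category with object set $X$ such that every $A_{x,y}$ is finitely generated projective. The following are equivalent: (a) $A$ is Hopf and has a non-singular right integral family; (b) $A$ has both a non-singular right integral family and a non-singular left integral family; (c) $A$ is Hopf and Frobenius; (d) $A$ is Hopf and $\int^\ell_{A,x}\cong k$ for all $x\in X$; (e) $A$ has a right non-singular left integral family, and for all $x,y\in X$ with $A_{x,y}\neq0$ the modules $A_{x,y}$ and $A_{y,y}$ have the same rank; (f) $A$ is Hopf.
   Context: $k$-linear category $A$ with object set $X$: $k$-modules $A_{x,y}$, compositions $m_{xyz}\colon A_{x,y}\otimes A_{y,z}\to A_{x,z}$ and units $j_x\colon k\to A_{x,x}$ (write $1_x=j_x(1)$), associative and unital. Semi-Hopf: each $A_{x,y}$ is a $k$-coalgebra $(\delta_{xy},\epsilon_{xy})$ with all $m_{xyz},j_x$ coalgebra morphisms. Hopf: $k$-linear $s_{xy}\colon A_{x,y}\to A_{y,x}$ with $a_{(1)}s_{xy}(a_{(2)})=\epsilon_{xy}(a)1_x$ and $s_{xy}(a_{(1)})a_{(2)}=\epsilon_{xy}(a)1_y$ for $a\in A_{x,y}$. $A^*_{x,y}=\mathrm{Hom}_k(A_{x,y},k)$. Left integral family: elements $t^{xy}\in A_{x,y}$ with $a\,t^{xy}=\epsilon_{zx}(a)t^{zy}$ for all $z$ and $a\in A_{z,x}$; right integral family: $t^{xy}\,a=\epsilon_{yz}(a)t^{xz}$ for all $z$, $a\in A_{y,z}$. For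 such $t$: $p_{xy}(f)=f(t^{xy}_{(1)})\,t^{xy}_{(2)}$ and $q_{xy}(f)=t^{xy}_{(1)}\,f(t^{xy}_{(2)})$ for $f\in A^*_{x,y}$. $t$ is left non-singular if each $p_{xx}$ is a split epimorphism, right non-singular if each $q_{xx}$ is, non-singular if both. Casimir family: $e^{xy}\in A_{x,y}\otimes A_{y,x}$ with $(m_{zxy}\otimes1)(a\otimes e^{xy})=(1\otimes m_{yzx})(e^{zy}\otimes a)$ for all $x,y,z$, $a\in A_{z,x}$. Frobenius system: Casimir family $e$ plus linear $\nu_x\colon A_{x,x}\to k$ with $(\nu_x\otimes1)(e^{xx})=1_x=(1\otimes\nu_x)(e^{xx})$; $A$ is Frobenius if it admits one. $\int^\ell_{A,z}$ is the $k$-module of families $(t_y)_{y\in X}$, $t_y\in A_{y,z}$, with $a\,t_y=\epsilon_{xy}(a)t_x$ for all $x,y$ and $a\in A_{x,y}$. *)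

From HB Require Import structures.
From mathcomp Require Import all_boot all_order all_algebra.
Set Implicit Arguments. Unset Strict Implicit. Unset Printing Implicit Defensive.
Import GRing.Theory.
Local Open Scope ring_scope.

Section Defs.
Variable k : comPzRingType.

Definition klinear (M N : lmodType k) (f : M -> N) : Prop :=
  forall (c : k) (a b : M), f (c *: a + b) = c *: f a + f b.
Definition kform (M : lmodType k) (f : M -> k) : Prop :=
  forall (c : k) (a b : M), f (c *: a + b) = c * f a + f b.
Definition kbilinear (M N P : lmodType k) (b : M -> N -> P) : Prop :=
  (forall n, klinear (fun m => b m n)) /\ (forall m, klinear (b m)).
Definition ktrilinear (M N O P : lmodType k) (b : M -> N -> O -> P) : Prop :=
  (forall n o, klinear (fun m => b m n o)) /\ (forall m o, klinear (fun n => b m n o))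
  /\ (forall m n, klinear (b m n)).

(* Elements of M (x) N are represented by finite formal sums sum_i m_i (x) n_i
   (lists of pairs); two such sums are equal in M (x) N iff every k-bilinear
   map out of M x N takes the same value on them (universal property). *)
Definition teq2 (M N : lmodType k) (s t : seq (M * N)) : Prop :=
  forall (P : lmodType k) (b : M -> N -> P), kbilinear b ->
    \sum_(p <- s) b p.1 p.2 = \sum_(p <- t) b p.1 p.2.
Definition teq3 (M N O : lmodType k) (s t : seq (M * N * O)) : Prop :=
  forall (P : lmodType k) (b : M -> N -> O -> P), ktrilinear b ->
    \sum_(p <- s) b p.1.1 p.1.2 p.2 = \sum_(p <- t) b p.1.1 p.1.2 p.2.

(* finitely generated projective = direct summand of some k^n *)
Definition fg_projective (M : lmodType k) : Prop :=
  exists n (i : M -> 'rV[k]_n) (p : 'rV[k]_n -> M),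
    klinear i /\ klinear p /\ forall a, p (i a) = a.
Definition has_rank (M : lmodType k) (n : nat) : Prop :=
  exists f : 'rV[k]_n -> M, klinear f /\ bijective f.
(* free (of finite rank; a finitely generated free module has a finite basis) *)
Definition free_fin (M : lmodType k) : Prop := exists n, has_rank M n.

Local Unset Implicit Arguments.
Record semiHopfCat (X : Type) := SemiHopfCat {
  Ahom : X -> X -> lmodType k;
  comp : forall x y z, Ahom x y -> Ahom y z -> Ahom x z;
  idm : forall x, Ahom x x;
  cmul : forall x y, Ahom x y -> seq (Ahom x y * Ahom x y);
  counit : forall x y, Ahom x y -> k;
  comp_bilin : forall x y z, kbilinear (comp x y z);
  compA : forall x y z w (a : Ahom x y) (b : Ahom y z) (c : Ahom z w),
    comp x z w (comp x y z a b) c = comp x y w a (comp y z w b c);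
  comp1m : forall x y (a : Ahom x y), comp x x y (idm x) a = a;
  compm1 : forall x y (a : Ahom x y), comp x y y a (idm y) = a;
  cmul_lin : forall x y (c : k) (a b : Ahom x y),
    teq2 (cmul x y (c *: a + b))
         ([seq (c *: p.1, p.2) | p <- cmul x y a] ++ cmul x y b);
  counit_lin : forall x y, kform (counit x y);
  coassoc : forall x y (a : Ahom x y),
    teq3 [seq (q.1, q.2, p.2) | p <- cmul x y a, q <- cmul x y p.1]
         [seq (p.1, q.1, q.2) | p <- cmul x y a, q <- cmul x y p.2];
  counitL : forall x y (a : Ahom x y),
    \sum_(p <- cmul x y a) counit x y p.1 *: p.2 = a;
  counitR : forall x y (a : Ahom x y),
    \sum_(p <- cmul x y a) counit x y p.2 *: p.1 = a;
  comp_cmul : forall x y z (a : Ahom x y) (b : Ahom y z),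
    teq2 (cmul x z (comp x y z a b))
         [seq (comp x y z p.1 q.1, comp x y z p.2 q.2) | p <- cmul x y a, q <- cmul y z b];
  comp_counit : forall x y z (a : Ahom x y) (b : Ahom y z),
    counit x z (comp x y z a b) = counit x y a * counit y z b;
  idm_cmul : forall x, teq2 (cmul x x (idm x)) [:: (idm x, idm x)];
  idm_counit : forall x, counit x x (idm x) = 1
}.
Local Set Implicit Arguments.
End Defs.
Arguments Ahom {k X}. Arguments comp {k X}. Arguments idm {k X}. Arguments cmul {k X}. Arguments counit {k X}.

Section Defs2.
Variable k : comPzRingType.

Variables (X : Type) (C : semiHopfCat k X).
Local Notation A := (Ahom C).
Local Notation m := (comp C _ _ _).
Local Notation del := (cmul C _ _).
Local Notation eps := (counit C _ _).

Definition is_Hopf : Prop :=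
  exists s : forall x y, A x y -> A y x,
    (forall x y, klinear (s x y)) /\
    (forall x y (a : A x y), \sum_(p <- del a) m p.1 (s x y p.2) = eps a *: idm C x) /\
    (forall x y (a : A x y), \sum_(p <- del a) m (s x y p.1) p.2 = eps a *: idm C y).

Definition left_integral (t : forall x y, A x y) : Prop :=
  forall x y z (a : A z x), m a (t x y) = eps a *: t z y.
Definition right_integral (t : forall x y, A x y) : Prop :=
  forall x y z (a : A y z), m (t x y) a = eps a *: t x z.

(* p_{xx}(f) = f(t_(1)) t_(2) is a split epimorphism A*_{x,x} -> A_{x,x}:
   there is a k-linear g : A_{x,x} -> A*_{x,x} with p_{xx} o g = id *)
Definition left_nonsingular (t : forall x y, A x y) : Prop :=
  forall x, exists g : A x x -> A x x -> k,
    (forall a, kform (g a)) /\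
    (forall c a b u, g (c *: a + b) u = c * g a u + g b u) /\
    (forall a, \sum_(p <- del (t x x)) g a p.1 *: p.2 = a).
(* q_{xx}(f) = t_(1) f(t_(2)) is a split epimorphism *)
Definition right_nonsingular (t : forall x y, A x y) : Prop :=
  forall x, exists g : A x x -> A x x -> k,
    (forall a, kform (g a)) /\
    (forall c a b u, g (c *: a + b) u = c * g a u + g b u) /\
    (forall a, \sum_(p <- del (t x x)) g a p.2 *: p.1 = a).
Definition nonsingular t := left_nonsingular t /\ right_nonsingular t.

Definition casimir (e : forall x y, seq (A x y * A y x)) : Prop :=
  forall x y z (a : A z x),
    teq2 [seq (m a p.1, p.2) | p <- e x y] [seq (p.1, m p.2 a) | p <- e z y].

Definition is_Frobenius : Prop :=
  exists (e : forall x y, seq (A x y * A y x)) (nu : forall x, A x x -> k),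
    casimir e /\ (forall x, kform (nu x)) /\
    (forall x, \sum_(p <- e x x) nu x p.1 *: p.2 = idm C x) /\
    (forall x, \sum_(p <- e x x) nu x p.2 *: p.1 = idm C x).

Definition in_lint (z : X) (t : forall y, A y z) : Prop :=
  forall x y (a : A x y), m a (t y) = eps a *: t x.
(* int^l_{A,z} is isomorphic to k: some t0 such that c |-> c t0 is a
   k-linear bijection k -> int^l_{A,z} (every k-linear map k -> int is of this form) *)
Definition lint_iso_k (z : X) : Prop :=
  exists t0 : forall y, A y z, in_lint t0 /\
    (forall t, in_lint t -> exists c : k, forall y, t y = c *: t0 y) /\
    (forall c : k, (forall y, c *: t0 y = 0) -> c = 0).

Definition same_rank_cond : Prop :=
  forall x y, (exists a : A x y, a != 0) ->
    exists n, has_rank (A x y) n /\ has_rank (A y y) n.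

End Defs2.
Arguments is_Hopf {k X} C. Arguments left_integral {k X} C t. Arguments right_integral {k X} C t.
Arguments left_nonsingular {k X} C t. Arguments right_nonsingular {k X} C t.
Arguments nonsingular {k X} C t. Arguments casimir {k X} C e. Arguments is_Frobenius {k X} C.
Arguments in_lint {k X} C z t. Arguments lint_iso_k {k X} C z. Arguments same_rank_cond {k X} C.

From HB Require Import structures.
From mathcomp Require Import all_boot all_order all_algebra.
From mathcomp Require Import ring.
From Stdlib Require Import IndefiniteDescription FunctionalExtensionality.
Set Implicit Arguments. Unset Strict Implicit. Unset Printing Implicit Defensive.
Import GRing.Theory.
Local Open Scope ring_scope.

(* Condition (f), existence of an antipode, is the hub.
   - (b) => (f): a left integral family t with q_{xx} split gives a right
     convolution inverse s(a) = t_(1) lam(a t_(2)) of the identity, a right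
     integral family with p_{xx} split gives a left one, and one-sided
     inverses coincide (Hopf_of_integrals).
   - (e) => (f): the right inverse is two-sided because convolution with it
     inverts convolution with the identity, Hom(A_{x,y}, A_{y,y}) ->
     End(A_{x,y}), a split epimorphism between free modules of the same rank
     (Hopf_of_same_rank); conversely an antipode forces equal ranks.
   - (f) => (a),(c),(d): in each Hopf algebra A_{y,y} the left integrals are
     the image of an explicit projection, and the fundamental theorem of
     Hopf modules shows they form a free module of rank one with a generator
     t and a form phi with t_(1) phi(s(t_(2))) = 1.  Spreading t along
     elements of counit one gives a left integral family that is
     non-singular, yields a Frobenius system, and generates int^l
     (Hopf_lint_family); the right-handed family is obtained from the
     opposite-coopposite category. *)

Section Linearity.
Variable k : comPzRingType.
Implicit Types M N P : lmodType k.

Lemma klin0 M N (f : M -> N) : klinear f -> f 0 = 0.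
Proof.
move=> h; have e := h 1 0 0; rewrite !scale1r addr0 in e.
by have := congr1 (fun v => v - f 0) e; rewrite /= subrr addrK => <-.
Qed.

Lemma klinD M N (f : M -> N) : klinear f -> forall a b, f (a + b) = f a + f b.
Proof. by move=> h a b; rewrite -[a]scale1r h !scale1r. Qed.

Lemma klinZ M N (f : M -> N) : klinear f -> forall c a, f (c *: a) = c *: f a.
Proof. by move=> h c a; rewrite -[c *: a]addr0 h klin0 // addr0. Qed.

Lemma klin_sum M N (f : M -> N) : klinear f ->
  forall I (r : seq I) (P : pred I) (F : I -> M),
  f (\sum_(i <- r | P i) F i) = \sum_(i <- r | P i) f (F i).
Proof.
move=> h I r P F; elim: r => [|i r IH]; first by rewrite !big_nil klin0.
by rewrite !big_cons; case: (P i) => //; rewrite klinD // IH.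
Qed.

Lemma klinear_comp M N P (f : M -> N) (g : N -> P) :
  klinear f -> klinear g -> klinear (fun x => g (f x)).
Proof. by move=> hf hg c a b; rewrite hf hg. Qed.

Lemma kform0 M (f : M -> k) : kform f -> f 0 = 0.
Proof.
move=> h; have e := h 1 0 0; rewrite !scale1r addr0 mul1r in e.
by have := congr1 (fun v => v - f 0) e; rewrite /= subrr addrK => <-.
Qed.

Lemma kformD M (f : M -> k) : kform f -> forall a b, f (a + b) = f a + f b.
Proof. by move=> h a b; rewrite -[a]scale1r h !scale1r mul1r. Qed.

Lemma kformZ M (f : M -> k) : kform f -> forall c a, f (c *: a) = c * f a.
Proof. by move=> h c a; rewrite -[c *: a]addr0 h kform0 // addr0. Qed.

Lemma kform_sum M (f : M -> k) : kform f ->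
  forall I (r : seq I) (P : pred I) (F : I -> M),
  f (\sum_(i <- r | P i) F i) = \sum_(i <- r | P i) f (F i).
Proof.
move=> h I r P F; elim: r => [|i r IH]; first by rewrite !big_nil kform0.
by rewrite !big_cons; case: (P i) => //; rewrite kformD // IH.
Qed.

Lemma klinear_inv M N (f : M -> N) (g : N -> M) :
  klinear f -> cancel f g -> cancel g f -> klinear g.
Proof. by move=> hf fK gK c a b; apply: (can_inj fK); rewrite hf !gK. Qed.

Lemma trivial_ring_eq0 M (h : (1 : k) = 0) (v : M) : v = 0.
Proof. by rewrite -[v]scale1r h scale0r. Qed.

End Linearity.

(* The key facts are that the rank of a free
   module is well defined over a nonzero commutative ring (via determinants),
   and that a split epimorphism between free modules of the same rank is an
   isomorphism (a one-sided inverse of a square matrix is two-sided). *)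
Section FreeModules.
Variable k : comPzRingType.

Lemma mul_lin1_mx m n (f : 'rV[k]_m -> 'rV[k]_n) (hf : klinear f) u :
  u *m lin1_mx f = f u.
Proof.
rewrite [u in RHS]matrix_sum_delta big_ord1 (klin_sum hf); apply/rowP=> i.
by rewrite mxE summxE; apply: eq_bigr => j _; rewrite klinZ // !mxE.
Qed.

Lemma klin_mulmx a b (P : 'M[k]_(a, b)) : klinear (fun v : 'rV[k]_a => v *m P).
Proof. by move=> c u v; rewrite mulmxDl scalemxAl. Qed.

(* A right inverse of a linear endomorphism of k^n is a left inverse, since
   A B = 1 implies B A = 1 for square matrices over a commutative ring. *)
Lemma rV_right_inv_is_inv n (f g : 'rV[k]_n -> 'rV[k]_n) :
  klinear f -> klinear g -> (forall v, f (g v) = v) -> forall v, g (f v) = v.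
Proof.
move=> hf hg fg.
have e : lin1_mx g *m lin1_mx f = 1%:M.
  apply/row_matrixP => i; rewrite row_mul rowE !mul_lin1_mx //.
  by rewrite fg rowE mulmx1.
move=> v; rewrite -(mul_lin1_mx hf) -(mul_lin1_mx hg) -mulmxA.
by rewrite (mulmx1C e) mulmx1.
Qed.

Lemma has_rank_iso (M : lmodType k) n : has_rank M n ->
  exists (f : 'rV[k]_n -> M) (g : M -> 'rV[k]_n),
    [/\ klinear f, klinear g, cancel f g & cancel g f].
Proof.
by move=> [f [hf [g fK gK]]]; exists f, g; split=> //; exact: klinear_inv hf fK gK.
Qed.

Lemma split_epi_same_rank_inv (M N : lmodType k) n (L : M -> N) (R : N -> M) :
  has_rank M n -> has_rank N n -> klinear L -> klinear R ->
  (forall v, L (R v) = v) -> forall u, R (L u) = u.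
Proof.
move=> /has_rank_iso[a [a' [ha ha' aK a'K]]] /has_rank_iso[b [b' [hb hb' bK b'K]]].
move=> hL hR LR u.
have hf : klinear (fun v => b' (L (a v))) by do 2 apply: klinear_comp => //.
have hg : klinear (fun v => a' (R (b v))) by do 2 apply: klinear_comp => //.
have fg : forall v, b' (L (a (a' (R (b v))))) = v by move=> v; rewrite a'K LR bK.
have := rV_right_inv_is_inv hf hg fg (a' u).
by rewrite a'K b'K => /(can_inj a'K).
Qed.

(* If k^(b+c+1) is a retract of k^b then 1 = 0: the retraction matrix,
   padded by a zero column, would be invertible with zero determinant. *)
Lemma retract_larger_rV b c (L : 'rV[k]_(b + c.+1) -> 'rV[k]_b) R :
  klinear L -> klinear R -> (forall v, R (L v) = v) -> (1 : k) = 0.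
Proof.
move=> hL hR RL.
have e : lin1_mx L *m lin1_mx R = 1%:M.
  apply/row_matrixP => i; rewrite row_mul rowE !mul_lin1_mx //.
  by rewrite RL rowE mulmx1.
pose N1 : 'M[k]_(b + c.+1) := row_mx (lin1_mx L) 0.
pose N2 : 'M[k]_(b + c.+1) := col_mx (lin1_mx R) 0.
have e2 : N1 *m N2 = 1%:M by rewrite mul_row_col mul0mx addr0.
have d1 : \det N1 = 0.
  rewrite (expand_det_col _ (rshift b ord_max)) big1 // => i _.
  by rewrite row_mxEr mxE mul0r.
by have := congr1 determinant e2; rewrite det_mulmx d1 mul0r det1.
Qed.

Lemma retract_rank_le (M N : lmodType k) a b (L : M -> N) (R : N -> M) :
  has_rank M a -> has_rank N b -> klinear L -> klinear R ->
  (forall v, R (L v) = v) -> (1 : k) != 0 -> (a <= b)%N.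
Proof.
move=> /has_rank_iso[f [f' [hf hf' fK f'K]]] /has_rank_iso[g [g' [hg hg' gK g'K]]].
move=> hL hR RL nz; case: (leqP a b) => // ba.
have [c ec] : exists c, a = (b + c.+1)%N.
  by exists (a - b.+1)%N; rewrite addnS -addSn subnKC.
subst a; move: nz; rewrite (@retract_larger_rV b c (fun v => g' (L (f v)))
  (fun w => f' (R (g w)))) ?eqxx //; try by do 2 apply: klinear_comp.
by move=> v; rewrite g'K RL fK.
Qed.

Lemma iso_rank_eq (M N : lmodType k) a b (L : M -> N) (R : N -> M) :
  has_rank M a -> has_rank N b -> klinear L -> klinear R ->
  (forall v, R (L v) = v) -> (forall w, L (R w) = w) -> (1 : k) != 0 -> a = b.
Proof.
move=> ha hb hL hR RL LR nz; apply/eqP; rewrite eqn_leq.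
by rewrite (retract_rank_le ha hb hL hR RL nz) (retract_rank_le hb ha hR hL LR nz).
Qed.

Lemma has_rank_mx a b : has_rank ('M[k]_(a, b)) (a * b).
Proof.
exists (@vec_mx k a b); split; first by move=> c u v; rewrite linearP.
by exists mxvec; [exact: vec_mxK | exact: mxvecK].
Qed.

End FreeModules.

(* Coordinates with respect to the basis of a free module M ~ k^n given by a
   linear isomorphism f with inverse g: basis vectors eb i and coordinate
   forms ed i (the dual basis). *)
Section Coordinates.
Variables (k : comPzRingType) (M : lmodType k) (n : nat).
Variables (f : 'rV[k]_n -> M) (g : M -> 'rV[k]_n).
Hypotheses (hf : klinear f) (fK : cancel f g) (gK : cancel g f).
Let hg := klinear_inv hf fK gK.

Definition eb (i : 'I_n) : M := f (delta_mx 0 i).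
Definition ed (i : 'I_n) (u : M) : k := g u 0 i.

Lemma ed_form i : kform (ed i).
Proof. by move=> c u v; rewrite /ed hg !mxE. Qed.

Lemma ed_eb i j : ed i (eb j) = (i == j)%:R.
Proof. by rewrite /ed /eb fK mxE eqxx. Qed.

Lemma expand (u : M) : u = \sum_i ed i u *: eb i.
Proof.
rewrite -{1}(gK u) [g u]row_sum_delta (klin_sum hf); apply: eq_bigr => i _.
by rewrite klinZ.
Qed.

Lemma expand_form (phi : M -> k) : kform phi -> forall u, phi u = \sum_i ed i u * phi (eb i).
Proof.
move=> hphi u; rewrite {1}(expand u) (kform_sum hphi); apply: eq_bigr => i _.
by rewrite kformZ.
Qed.

(* Moving a linear map L across the canonical element sum_i ed i (x) eb i
   of M* (x) M: it becomes the transpose L* on the dual side. *)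
Lemma dual_basis_transpose (V : lmodType k) (G : (M -> k) -> M -> V) (L : M -> M) :
  klinear L -> (forall i, klinear (G (ed i))) ->
  (forall (c : 'I_n -> k) v, G (fun u => \sum_i c i * ed i u) v = \sum_i c i *: G (ed i) v) ->
  \sum_i G (ed i) (L (eb i)) = \sum_i G (fun u => ed i (L u)) (eb i).
Proof.
move=> hL hG hc.
transitivity (\sum_i \sum_j ed j (L (eb i)) *: G (ed i) (eb j)).
  apply: eq_bigr => i _; rewrite {1}(expand (L (eb i))) (klin_sum (hG _)).
  by apply: eq_bigr => j _; rewrite klinZ.
rewrite exchange_big; apply: eq_bigr => j _; rewrite -hc.
congr (G _ _); apply: functional_extensionality => u.
rewrite [in RHS](expand u) (klin_sum hL) (kform_sum (ed_form j)).
by apply: eq_bigr => i _; rewrite klinZ // (kformZ (ed_form j)) mulrC.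
Qed.

Lemma dual_basis_transpose2 (V : lmodType k) (G : (M -> M -> k) -> M -> V)
  (mu : M -> M -> M) :
  kbilinear mu -> (forall j i, klinear (G (fun a b => ed j a * ed i b))) ->
  (forall (c : 'I_n -> 'I_n -> k) v,
     G (fun a b => \sum_j \sum_i c j i * (ed j a * ed i b)) v =
     \sum_j \sum_i c j i *: G (fun a b => ed j a * ed i b) v) ->
  \sum_j \sum_i G (fun a b => ed j a * ed i b) (mu (eb j) (eb i)) =
  \sum_l G (fun a b => ed l (mu a b)) (eb l).
Proof.
move=> [hmu1 hmu2] hG hc.
transitivity (\sum_j \sum_i \sum_l
    ed l (mu (eb j) (eb i)) *: G (fun a b => ed j a * ed i b) (eb l)).
  apply: eq_bigr => j _; apply: eq_bigr => i _.
  rewrite {1}(expand (mu (eb j) (eb i))) (klin_sum (hG _ _)).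
  by apply: eq_bigr => l _; rewrite klinZ.
transitivity (\sum_l \sum_j \sum_i
    ed l (mu (eb j) (eb i)) *: G (fun a b => ed j a * ed i b) (eb l)).
  by under eq_bigr do rewrite exchange_big; rewrite exchange_big.
apply: eq_bigr => l _; rewrite -hc.
congr (G _ _); apply: functional_extensionality => a; apply: functional_extensionality => b.
rewrite [in RHS](expand a) (klin_sum (hmu1 _)) (kform_sum (ed_form l)).
apply: eq_bigr => j _; rewrite (klinZ (hmu1 _)) (kformZ (ed_form l)).
rewrite [in RHS](expand b) (klin_sum (hmu2 _)) (kform_sum (ed_form l)) mulr_sumr.
apply: eq_bigr => i _; rewrite (klinZ (hmu2 _)) (kformZ (ed_form l)).
ring.
Qed.

End Coordinates.

Lemma sum_delta_rV (k : comPzRingType) n (c : 'I_n -> k) l :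
  \sum_l' (delta_mx 0 l : 'rV[k]_n) 0 l' * c l' = c l.
Proof.
rewrite (bigD1 l) //= mxE !eqxx mul1r big1 ?addr0 // => l' nl.
by rewrite mxE eqxx (negbTE nl) mul0r.
Qed.

Lemma exchange_big4 (V : nmodType) (I J K L : Type) (r1 : seq I) (r2 : I -> seq J)
  (r3 : seq K) (r4 : seq L) (F : I -> J -> K -> L -> V) :
  \sum_(a <- r1) \sum_(b <- r2 a) \sum_(c <- r3) \sum_(d <- r4) F a b c d =
  \sum_(c <- r3) \sum_(d <- r4) \sum_(a <- r1) \sum_(b <- r2 a) F a b c d.
Proof.
under eq_bigr do rewrite exchange_big.
under eq_bigr do under eq_bigr do rewrite exchange_big.
by rewrite exchange_big; apply: eq_bigr => c _; rewrite exchange_big.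
Qed.

(* A coproduct is a formal list of
   tensors, equal in A (x) A only up to bilinear maps; all rules below are
   therefore stated for Sweedler sums sum_(p <- cmul a) F p.1 p.2 with F
   bilinear (trilinear for coassociativity). *)
Section SemiHopfCalculus.
Variables (k : comPzRingType) (X : Type) (C : semiHopfCat k X).
Local Notation A := (Ahom C).
Local Notation m := (comp C _ _ _).

Section Composition.
Variables x y z : X.
Implicit Types (a : A x y) (b : A y z).
Lemma compDl a a' b : m (a + a') b = m a b + m a' b.
Proof. exact: (klinD ((comp_bilin _ _ C x y z).1 b) a a'). Qed.
Lemma compZl c a b : m (c *: a) b = c *: m a b.
Proof. exact: (klinZ ((comp_bilin _ _ C x y z).1 b) c a). Qed.
Lemma comp0l b : m (0 : A x y) b = 0.
Proof. exact: (klin0 ((comp_bilin _ _ C x y z).1 b)). Qed.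
Lemma comp_suml I (r : seq I) (P : pred I) (F : I -> A x y) b :
  m (\sum_(i <- r | P i) F i) b = \sum_(i <- r | P i) m (F i) b.
Proof. exact: (klin_sum ((comp_bilin _ _ C x y z).1 b) r P F). Qed.
Lemma compDr a b b' : m a (b + b') = m a b + m a b'.
Proof. exact: (klinD ((comp_bilin _ _ C x y z).2 a) b b'). Qed.
Lemma compZr c a b : m a (c *: b) = c *: m a b.
Proof. exact: (klinZ ((comp_bilin _ _ C x y z).2 a) c b). Qed.
Lemma comp0r a : m a (0 : A y z) = 0.
Proof. exact: (klin0 ((comp_bilin _ _ C x y z).2 a)). Qed.
Lemma comp_sumr I (r : seq I) (P : pred I) (F : I -> A y z) a :
  m a (\sum_(i <- r | P i) F i) = \sum_(i <- r | P i) m a (F i).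
Proof. exact: (klin_sum ((comp_bilin _ _ C x y z).2 a) r P F). Qed.
End Composition.

Section Coalgebra.
Variables x y : X.
Implicit Types a : A x y.
Local Notation eps := (counit C x y).
Local Notation del := (cmul C x y).

Lemma epsD a a' : eps (a + a') = eps a + eps a'.
Proof. exact: (kformD (counit_lin _ _ C x y)). Qed.
Lemma epsZ c a : eps (c *: a) = c * eps a.
Proof. exact: (kformZ (counit_lin _ _ C x y)). Qed.
Lemma eps0 : eps 0 = 0.
Proof. exact: (kform0 (counit_lin _ _ C x y)). Qed.
Lemma eps_sum I (r : seq I) (P : pred I) (F : I -> A x y) :
  eps (\sum_(i <- r | P i) F i) = \sum_(i <- r | P i) eps (F i).
Proof. exact: (kform_sum (counit_lin _ _ C x y)). Qed.

Lemma sweedler_klinear (P : lmodType k) (F : A x y -> A x y -> P) : kbilinear F ->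
  klinear (fun a => \sum_(p <- del a) F p.1 p.2).
Proof.
move=> hF c a b /=; rewrite (cmul_lin _ _ C x y c a b P F hF) big_cat big_map /=.
congr (_ + _); rewrite scaler_sumr; apply: eq_bigr => p _.
by rewrite (klinZ (hF.1 _)).
Qed.

Lemma sweedlerZ (P : lmodType k) (F : A x y -> A x y -> P) : kbilinear F -> forall c a,
  \sum_(p <- del (c *: a)) F p.1 p.2 = c *: \sum_(p <- del a) F p.1 p.2.
Proof. by move=> hF c a; exact: (klinZ (sweedler_klinear hF) c a). Qed.

Lemma sweedler0 (P : lmodType k) (F : A x y -> A x y -> P) : kbilinear F ->
  \sum_(p <- del 0) F p.1 p.2 = 0.
Proof. by move=> hF; exact: (klin0 (sweedler_klinear hF)). Qed.

Lemma coassoc_sum (P : lmodType k) (F : A x y -> A x y -> A x y -> P) : ktrilinear F ->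
  forall a, \sum_(p <- del a) \sum_(q <- del p.1) F q.1 q.2 p.2 =
            \sum_(p <- del a) \sum_(q <- del p.2) F p.1 q.1 q.2.
Proof. by move=> hF a; have := coassoc _ _ C x y a P F hF; rewrite !big_allpairs_dep. Qed.

Lemma counitL_lin (P : lmodType k) (G : A x y -> P) : klinear G -> forall a,
  \sum_(p <- del a) eps p.1 *: G p.2 = G a.
Proof.
move=> hG a; rewrite -[in RHS](counitL _ _ C x y a) (klin_sum hG).
by apply: eq_bigr => p _; rewrite klinZ.
Qed.

Lemma counitR_lin (P : lmodType k) (G : A x y -> P) : klinear G -> forall a,
  \sum_(p <- del a) eps p.2 *: G p.1 = G a.
Proof.
move=> hG a; rewrite -[in RHS](counitR _ _ C x y a) (klin_sum hG).
by apply: eq_bigr => p _; rewrite klinZ.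
Qed.

Lemma counitL_form (G : A x y -> k) : kform G -> forall a,
  \sum_(p <- del a) eps p.1 * G p.2 = G a.
Proof.
move=> hG a; rewrite -[in RHS](counitL _ _ C x y a) (kform_sum hG).
by apply: eq_bigr => p _; rewrite kformZ.
Qed.

End Coalgebra.

Lemma cmul_comp_sum x y z (P : lmodType k) (F : A x z -> A x z -> P) :
  kbilinear F -> forall (a : A x y) (b : A y z),
  \sum_(p <- cmul C x z (m a b)) F p.1 p.2 =
  \sum_(p <- cmul C x y a) \sum_(q <- cmul C y z b) F (m p.1 q.1) (m p.2 q.2).
Proof. by move=> hF a b; rewrite (comp_cmul _ _ C x y z a b P F hF) big_allpairs_dep. Qed.

Lemma cmul_idm_sum x (P : lmodType k) (F : A x x -> A x x -> P) : kbilinear F ->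
  \sum_(p <- cmul C x x (idm C x)) F p.1 p.2 = F (idm C x) (idm C x).
Proof. by move=> hF; rewrite (idm_cmul _ _ C x P F hF) big_seq1. Qed.

End SemiHopfCalculus.

Ltac split_sums := repeat (rewrite ?scaler_sumr -?big_split /=; apply: eq_bigr => ? _).

Section Antipode.
Variables (k : comPzRingType) (X : Type) (C : semiHopfCat k X).
Local Notation A := (Ahom C).
Local Notation m := (comp C _ _ _).

Definition antipode_l (s : forall x y, A x y -> A y x) : Prop :=
  forall x y (a : A x y), \sum_(p <- cmul C x y a) m p.1 (s x y p.2) = counit C x y a *: idm C x.
Definition antipode_r (s : forall x y, A x y -> A y x) : Prop :=
  forall x y (a : A x y), \sum_(p <- cmul C x y a) m (s x y p.1) p.2 = counit C x y a *: idm C y.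

Section ConvInverse2.
Variables x y z : X.
Variables (F : A x y -> A y z -> A z x) (G : A x y -> A y z -> A z x).
Hypotheses (hF : kbilinear F) (hG : kbilinear G).
Hypothesis FL : forall u v, \sum_(p <- cmul C x y u) \sum_(q <- cmul C y z v)
  m (F p.1 q.1) (m p.2 q.2) = (counit C x y u * counit C y z v) *: idm C z.
Hypothesis GR : forall u v, \sum_(p <- cmul C x y u) \sum_(q <- cmul C y z v)
  m (m p.1 q.1) (G p.2 q.2) = (counit C x y u * counit C y z v) *: idm C x.

(* F a b = F(a_(1), b_(1)) eps(a_(2)) eps(b_(2)), and the counits are
   rewritten with GR; symmetrically for G with FL. *)
Lemma conv2_expand_left a b : F a b = \sum_(p <- cmul C x y a) \sum_(q <- cmul C y z b)
  m (F p.1 q.1) (\sum_(p' <- cmul C x y p.2) \sum_(q' <- cmul C y z q.2)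
      m (m p'.1 q'.1) (G p'.2 q'.2)).
Proof.
under eq_bigr do under eq_bigr do rewrite GR compZr compm1 -scalerA.
under [RHS]eq_bigr do rewrite -scaler_sumr.
rewrite -[LHS](counitR_lin (G := fun w => F w b)) //; last exact: hF.1.
apply: eq_bigr => p _; congr (_ *: _).
by rewrite -[LHS](counitR_lin (G := fun w => F p.1 w)) //; exact: hF.2.
Qed.

Lemma conv2_expand_right a b : G a b = \sum_(p <- cmul C x y a) \sum_(q <- cmul C y z b)
  m (\sum_(p' <- cmul C x y p.1) \sum_(q' <- cmul C y z q.1)
      m (F p'.1 q'.1) (m p'.2 q'.2)) (G p.2 q.2).
Proof.
under eq_bigr do under eq_bigr do rewrite FL compZl comp1m -scalerA.
under [RHS]eq_bigr do rewrite -scaler_sumr.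
rewrite -[LHS](counitL_lin (G := fun w => G w b)) //; last exact: hG.1.
apply: eq_bigr => p _; congr (_ *: _).
by rewrite -[LHS](counitL_lin (G := fun w => G p.2 w)) //; exact: hG.2.
Qed.

Lemma conv_inverse_unique2 a b : F a b = G a b.
Proof.
rewrite conv2_expand_left conv2_expand_right.
transitivity (\sum_(p <- cmul C x y a) \sum_(q <- cmul C y z b)
    \sum_(p' <- cmul C x y p.2) \sum_(q' <- cmul C y z q.2)
    m (F p.1 q.1) (m (m p'.1 q'.1) (G p'.2 q'.2))).
  apply: eq_bigr => p _; apply: eq_bigr => q _.
  by rewrite comp_sumr; apply: eq_bigr => p' _; rewrite comp_sumr.
transitivity (\sum_(p <- cmul C x y a) \sum_(q <- cmul C y z b)
    \sum_(p' <- cmul C x y p.1) \sum_(q' <- cmul C y z q.1)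
    m (F p'.1 q'.1) (m (m p'.2 q'.2) (G p.2 q.2))); last first.
  apply: eq_bigr => p _; apply: eq_bigr => q _.
  rewrite comp_suml; apply: eq_bigr => p' _; rewrite comp_suml; apply: eq_bigr => q' _.
  by rewrite [RHS]compA.
under eq_bigr do rewrite exchange_big.
under [RHS]eq_bigr do rewrite exchange_big.
have [hF1 hF2] := hF; have [hG1 hG2] := hG.
pose Phi := fun (u1 u2 u3 : A x y) => \sum_(q <- cmul C y z b) \sum_(q' <- cmul C y z q.2)
    m (F u1 q.1) (m (m u2 q'.1) (G u3 q'.2)).
have hPhi : ktrilinear Phi.
  rewrite /Phi; split; [|split] => ? ? c u v; split_sums;
  by rewrite ?(klinD (hF1 _), klinZ (hF1 _), klinD (hG1 _), klinZ (hG1 _))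
    ?(compDl, compZl, compDr, compZr).
rewrite -(coassoc_sum hPhi a); apply: eq_bigr => p _; apply: eq_bigr => p' _.
pose Psi := fun (v1 v2 v3 : A y z) => m (F p'.1 v1) (m (m p'.2 v2) (G p.2 v3)).
have hPsi : ktrilinear Psi.
  rewrite /Psi; split; [|split] => ? ? c u v;
  by rewrite ?(klinD (hF2 _), klinZ (hF2 _), klinD (hG2 _), klinZ (hG2 _))
    ?(compDl, compZl, compDr, compZr).
by rewrite /Phi; have := coassoc_sum hPsi b; rewrite /Psi => ->.
Qed.

End ConvInverse2.

(* A one-sided antipode composed with the identity on the other side
   collapses by coassociativity: a_(1) s(a_(2)(1)) psi(a_(2)(2)) = psi(a). *)
Section OneSided.
Variable s : forall x y, A x y -> A y x.
Hypothesis hs : forall x y, klinear (@s x y).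

Lemma conv_antipode_l_cancel (hsL : antipode_l s) x y w (psi : A x y -> A x w) :
  klinear psi -> forall a : A x y,
  \sum_(p <- cmul C x y a) m p.1 (\sum_(q <- cmul C x y p.2) m (s q.1) (psi q.2)) = psi a.
Proof.
move=> hpsi a.
transitivity (\sum_(p <- cmul C x y a) \sum_(q <- cmul C x y p.2) m p.1 (m (s q.1) (psi q.2))).
  by apply: eq_bigr => p _; rewrite comp_sumr.
pose Phi := fun u1 u2 u3 : A x y => m u1 (m (s u2) (psi u3)).
have hPhi : ktrilinear Phi.
  rewrite /Phi; split; [|split] => ? ? c u v;
  by rewrite ?(klinD (@hs _ _), klinZ (@hs _ _), klinD hpsi, klinZ hpsi)
    ?(compDl, compZl, compDr, compZr).
rewrite -(coassoc_sum hPhi a) /Phi.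
under eq_bigr do under eq_bigr do rewrite -compA.
under eq_bigr do rewrite -comp_suml hsL compZl comp1m.
exact: counitL_lin.
Qed.

Lemma conv_antipode_r_cancel (hsR : antipode_r s) x y w (phi : A x y -> A y w) :
  klinear phi -> forall a : A x y,
  \sum_(p <- cmul C x y a) m (s p.1) (\sum_(q <- cmul C x y p.2) m q.1 (phi q.2)) = phi a.
Proof.
move=> hphi a.
transitivity (\sum_(p <- cmul C x y a) \sum_(q <- cmul C x y p.2) m (s p.1) (m q.1 (phi q.2))).
  by apply: eq_bigr => p _; rewrite comp_sumr.
pose Phi := fun u1 u2 u3 : A x y => m (s u1) (m u2 (phi u3)).
have hPhi : ktrilinear Phi.
  rewrite /Phi; split; [|split] => ? ? c u v;
  by rewrite ?(klinD (@hs _ _), klinZ (@hs _ _), klinD hphi, klinZ hphi)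
    ?(compDl, compZl, compDr, compZr).
rewrite -(coassoc_sum hPhi a) /Phi.
under eq_bigr do under eq_bigr do rewrite -compA.
under eq_bigr do rewrite -comp_suml hsR compZl comp1m.
exact: counitL_lin.
Qed.

End OneSided.

Lemma antipode_unique (s s' : forall x y, A x y -> A y x) :
  (forall x y, klinear (s x y)) -> (forall x y, klinear (s' x y)) ->
  antipode_l s -> antipode_r s' -> forall x y (a : A x y), s' x y a = s x y a.
Proof.
move=> hs hs' hL hR x y a.
rewrite -(conv_antipode_r_cancel hs' hR (hs x y) a).
transitivity (\sum_(p <- cmul C x y a) m (s' _ _ p.1) (counit C x y p.2 *: idm C x)).
  rewrite -[LHS](counitR_lin (G := fun u => s' x y u)) ?hs' //.
  by apply: eq_bigr => p _; rewrite compZr compm1.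
by apply: eq_bigr => p _; rewrite hL.
Qed.

Section TwoSided.
Variable s : forall x y, A x y -> A y x.
Hypothesis hs : forall x y, klinear (@s x y).
Hypotheses (hsL : antipode_l s) (hsR : antipode_r s).

Lemma antipodeD x y (a b : A x y) : s (a + b) = s a + s b.
Proof. exact: (klinD (@hs x y) a b). Qed.
Lemma antipodeZ x y c (a : A x y) : s (c *: a) = c *: s a.
Proof. exact: (klinZ (@hs x y) c a). Qed.

Lemma antipode_idm x : s (idm C x) = idm C x.
Proof.
have := hsR (idm C x); rewrite (cmul_idm_sum (F := fun u v => m (s u) v)).
  by rewrite idm_counit scale1r compm1.
by split=> [v|u] c a b; rewrite ?antipodeD ?antipodeZ ?(compDl, compZl, compDr, compZr).
Qed.

Lemma counit_antipode x y (a : A x y) : counit C y x (s a) = counit C x y a.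
Proof.
have := congr1 (counit C x x) (hsL a); rewrite epsZ idm_counit mulr1 eps_sum => <-.
rewrite -[in LHS](counitL_form (G := fun u => counit C y x (s u))).
  by apply: eq_bigr => p _; rewrite comp_counit.
by move=> c u v; rewrite antipodeD antipodeZ epsD epsZ.
Qed.

Lemma antipode_anti x y z (a : A x y) (b : A y z) :
  s (m a b) = m (s b) (s a).
Proof.
apply: (@conv_inverse_unique2 x y z (fun u v => s (m u v))
  (fun u v => m (s v) (s u))).
- by split=> [v|u] c a1 b1; rewrite ?(compDl, compZl, compDr, compZr) antipodeD antipodeZ.
- by split=> [v|u] c a1 b1; rewrite antipodeD antipodeZ ?(compDl, compZl, compDr, compZr).
- move=> u v; rewrite -(cmul_comp_sum (F := fun U V => m (s U) V)).
    by rewrite hsR comp_counit.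
  by split=> [V|U] c a1 b1; rewrite ?antipodeD ?antipodeZ ?(compDl, compZl, compDr, compZr).
- move=> u v.
  transitivity (\sum_(p <- cmul C x y u)
    m p.1 (m (\sum_(q <- cmul C y z v) m q.1 (s q.2)) (s p.2))).
    apply: eq_bigr => p _; rewrite comp_suml comp_sumr; apply: eq_bigr => q _.
    by rewrite !compA.
  rewrite hsL; under eq_bigr do rewrite compZl comp1m compZr.
  by rewrite -scaler_sumr hsL scalerA mulrC.
Qed.

End TwoSided.
End Antipode.

Lemma dchoice (T : Type) (U : T -> Type) (P : forall x, U x -> Prop) :
  (forall x, exists u, P x u) -> exists f : forall x, U x, forall x, P x (f x).
Proof.
move=> h; exists (fun x => proj1_sig (constructive_indefinite_description _ (h x))).
by move=> x; exact: (proj2_sig (constructive_indefinite_description _ (h x))).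
Qed.

(* One-sided antipodes from non-singular integrals: if t is a left integral
   family and t_(1) lam(t_(2)) = 1 then s(a) = t_(1) lam(a t_(2)) satisfies
   a_(1) s(a_(2)) = eps(a) 1; symmetrically for right integrals. *)
Section AntipodeFromIntegral.
Variables (k : comPzRingType) (X : Type) (C : semiHopfCat k X).
Local Notation A := (Ahom C).
Local Notation m := (comp C _ _ _).

(* Non-singularity only matters through the preimage of the identity. *)
Lemma right_nonsingular_form (t : forall x y, A x y) : right_nonsingular C t ->
  exists lam : forall x, A x x -> k, forall x, kform (lam x) /\
    \sum_(p <- cmul C x x (t x x)) lam x p.2 *: p.1 = idm C x.
Proof.
move=> h; apply: (@dchoice X (fun x => A x x -> k) (fun x l => kform l /\
  \sum_(p <- cmul C x x (t x x)) l p.2 *: p.1 = idm C x)) => x.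
by have [g [hg [_ hg2]]] := h x; exists (g (idm C x)).
Qed.

Lemma left_nonsingular_form (t : forall x y, A x y) : left_nonsingular C t ->
  exists lam : forall x, A x x -> k, forall x, kform (lam x) /\
    \sum_(p <- cmul C x x (t x x)) lam x p.1 *: p.2 = idm C x.
Proof.
move=> h; apply: (@dchoice X (fun x => A x x -> k) (fun x l => kform l /\
  \sum_(p <- cmul C x x (t x x)) l p.1 *: p.2 = idm C x)) => x.
by have [g [hg [_ hg2]]] := h x; exists (g (idm C x)).
Qed.

Lemma antipode_l_of_left_integral (t : forall x y, A x y) : left_integral C t ->
  right_nonsingular C t ->
  exists s : forall x y, A x y -> A y x, (forall x y, klinear (s x y)) /\ antipode_l s.
Proof.
move=> ht hns; have [lam hlam] := right_nonsingular_form hns.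
exists (fun x y a => \sum_(p <- cmul C y x (t y x)) lam x (m a p.2) *: p.1); split.
  move=> x y c u v /=; rewrite scaler_sumr -big_split; apply: eq_bigr => p _ /=.
  have hl := (hlam x).1.
  by rewrite compDl compZl (kformD hl) (kformZ hl) scalerDl scalerA.
move=> x y a /=; have hl := (hlam x).1.
transitivity (\sum_(p <- cmul C x y a) \sum_(q <- cmul C y x (t y x))
   lam x (m p.2 q.2) *: m p.1 q.1).
  apply: eq_bigr => p _; rewrite comp_sumr; apply: eq_bigr => q _; by rewrite compZr.
have hF : kbilinear (fun U V : A x x => lam x V *: U).
  split=> [V|U] c u v /=; first by rewrite scalerDr scalerA mulrC -scalerA.
  by rewrite (kformD hl) (kformZ hl) scalerDl scalerA.
rewrite -(cmul_comp_sum (F := fun U V => lam x V *: U)) //.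
by rewrite ht (sweedlerZ (F := fun U V => lam x V *: U)) // (hlam x).2.
Qed.

Lemma antipode_r_of_right_integral (t : forall x y, A x y) : right_integral C t ->
  left_nonsingular C t ->
  exists s : forall x y, A x y -> A y x, (forall x y, klinear (s x y)) /\ antipode_r s.
Proof.
move=> ht hns; have [lam hlam] := left_nonsingular_form hns.
exists (fun x y a => \sum_(p <- cmul C y x (t y x)) lam y (m p.1 a) *: p.2); split.
  move=> x y c u v /=; rewrite scaler_sumr -big_split; apply: eq_bigr => p _ /=.
  have hl := (hlam y).1.
  by rewrite compDr compZr (kformD hl) (kformZ hl) scalerDl scalerA.
move=> x y a /=; have hl := (hlam y).1.
transitivity (\sum_(q <- cmul C y x (t y x)) \sum_(p <- cmul C x y a)
   lam y (m q.1 p.1) *: m q.2 p.2).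
  rewrite exchange_big; apply: eq_bigr => p _; rewrite comp_suml; apply: eq_bigr => q _.
  by rewrite compZl.
have hF : kbilinear (fun U V : A y y => lam y U *: V).
  split=> [V|U] c u v /=; last by rewrite scalerDr scalerA mulrC -scalerA.
  by rewrite (kformD hl) (kformZ hl) scalerDl scalerA.
rewrite -(cmul_comp_sum (F := fun U V => lam y U *: V)) //.
by rewrite ht (sweedlerZ (F := fun U V => lam y U *: V)) // (hlam y).2.
Qed.

(* (b) => (f): the two one-sided antipodes coincide. *)
Lemma Hopf_of_integrals : (exists t, right_integral C t /\ left_nonsingular C t) ->
  (exists t, left_integral C t /\ right_nonsingular C t) -> is_Hopf C.
Proof.
move=> [t [ht hnt]] [t' [ht' hnt']].
have [s [hs hsL]] := antipode_l_of_left_integral ht' hnt'.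
have [s' [hs' hsR]] := antipode_r_of_right_integral ht hnt.
exists s; split=> //; split=> // x y a.
by rewrite -(hsR x y a); apply: eq_bigr => p _; rewrite (antipode_unique hs hs' hsL hsR).
Qed.

End AntipodeFromIntegral.

(* Fix x, y with A_{x,y} ~ k^r and A_{y,y} ~ k^n.
   Convolution with the identity, phi |-> (a |-> a_(1) phi(a_(2))), maps
   Hom(A_{x,y}, A_{y,y}) ~ k^(r*n) to End(A_{x,y}) ~ k^(r*r), and convolution
   with a right antipode s maps back; these are one-sided inverses, and
   mutually inverse when s is a two-sided antipode.  Hence a right antipode
   is two-sided when r = n (e => f), and an antipode forces r = n (f => e).
   Linear maps are represented by matrices through the chosen bases. *)
Section ConvolutionMatrices.
Variables (k : comPzRingType) (X : Type) (C : semiHopfCat k X).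
Local Notation A := (Ahom C).
Local Notation m := (comp C _ _ _).
Variables (x y : X) (r n : nat).
Variables (f1 : 'rV[k]_r -> A x y) (g1 : A x y -> 'rV[k]_r).
Variables (f2 : 'rV[k]_n -> A y y) (g2 : A y y -> 'rV[k]_n).
Hypotheses (hf1 : klinear f1) (hf2 : klinear f2).
Hypotheses (f1K : cancel f1 g1) (g1K : cancel g1 f1) (f2K : cancel f2 g2) (g2K : cancel g2 f2).
Let hg1 := klinear_inv hf1 f1K g1K.
Let hg2 := klinear_inv hf2 f2K g2K.

Definition homM (P : 'M[k]_(r, n)) (a : A x y) : A y y := f2 (g1 a *m P).
Definition endM (P : 'M[k]_(r, r)) (a : A x y) : A x y := f1 (g1 a *m P).

Lemma klin_homM P : klinear (homM P).
Proof. by apply: klinear_comp hf2; apply: klinear_comp hg1 (klin_mulmx _). Qed.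
Lemma klin_endM P : klinear (endM P).
Proof. by apply: klinear_comp hf1; apply: klinear_comp hg1 (klin_mulmx _). Qed.

Lemma homM_lin c P Q a : homM (c *: P + Q) a = c *: homM P a + homM Q a.
Proof. by rewrite /homM mulmxDr -scalemxAr hf2. Qed.
Lemma endM_lin c P Q a : endM (c *: P + Q) a = c *: endM P a + endM Q a.
Proof. by rewrite /endM mulmxDr -scalemxAr hf1. Qed.

Lemma homM_inj P Q : (forall a, homM P a = homM Q a) -> P = Q.
Proof.
move=> e; apply/row_matrixP => i; rewrite !rowE.
by have := e (f1 (delta_mx 0 i)); rewrite /homM f1K => /(can_inj f2K).
Qed.
Lemma endM_inj P Q : (forall a, endM P a = endM Q a) -> P = Q.
Proof.
move=> e; apply/row_matrixP => i; rewrite !rowE.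
by have := e (f1 (delta_mx 0 i)); rewrite /endM f1K => /(can_inj f1K).
Qed.

Lemma homM_surj (phi : A x y -> A y y) : klinear phi ->
  exists P, forall a, homM P a = phi a.
Proof.
move=> hphi; exists (lin1_mx (fun v => g2 (phi (f1 v)))) => a.
rewrite /homM mul_lin1_mx ?g1K ?g2K //.
by apply: klinear_comp hg2; exact: klinear_comp hf1 hphi.
Qed.

Definition conv_id (P : 'M[k]_(r, n)) : 'M[k]_(r, r) :=
  lin1_mx (fun v => g1 (\sum_(p <- cmul C x y (f1 v)) m p.1 (homM P p.2))).

Lemma endM_conv_id P a : endM (conv_id P) a = \sum_(p <- cmul C x y a) m p.1 (homM P p.2).
Proof.
have hF : kbilinear (fun u v : A x y => m u (homM P v)).
  split=> [v|u] c a1 b1 /=; first by rewrite compDl compZl.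
  by rewrite (klinD (klin_homM P)) (klinZ (klin_homM P)) compDr compZr.
rewrite /endM /conv_id mul_lin1_mx ?g1K ?g1K //.
by apply: klinear_comp hg1; exact: klinear_comp hf1 (sweedler_klinear hF).
Qed.

Lemma klin_conv_id : klinear conv_id.
Proof.
move=> c P Q; apply: endM_inj => a; rewrite endM_lin !endM_conv_id scaler_sumr -big_split.
by apply: eq_bigr => p _; rewrite homM_lin compDr compZr.
Qed.

Section WithAntipode.
Variable s : forall x y, A x y -> A y x.
Hypothesis hs : forall x y, klinear (@s x y).

Definition conv_s (P : 'M[k]_(r, r)) : 'M[k]_(r, n) :=
  lin1_mx (fun v => g2 (\sum_(p <- cmul C x y (f1 v)) m (s p.1) (endM P p.2))).

Lemma homM_conv_s P a : homM (conv_s P) a = \sum_(p <- cmul C x y a) m (s p.1) (endM P p.2).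
Proof.
have hF : kbilinear (fun u v : A x y => m (s u) (endM P v)).
  split=> [v|u] c a1 b1 /=.
    by rewrite (klinD (@hs _ _)) (klinZ (@hs _ _)) compDl compZl.
  by rewrite (klinD (klin_endM P)) (klinZ (klin_endM P)) compDr compZr.
rewrite /homM /conv_s mul_lin1_mx ?g1K ?g2K //.
by apply: klinear_comp hg2; exact: klinear_comp hf1 (sweedler_klinear hF).
Qed.

Lemma klin_conv_s : klinear conv_s.
Proof.
move=> c P Q; apply: homM_inj => a; rewrite homM_lin !homM_conv_s scaler_sumr -big_split.
by apply: eq_bigr => p _; rewrite endM_lin compDr compZr.
Qed.

Lemma conv_idK (hsL : antipode_l s) P : conv_id (conv_s P) = P.
Proof.
apply: endM_inj => a; rewrite endM_conv_id.
under eq_bigr do rewrite homM_conv_s.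
exact: (conv_antipode_l_cancel hs hsL (klin_endM P)).
Qed.

Lemma conv_sK (hsR : antipode_r s) P : conv_s (conv_id P) = P.
Proof.
apply: homM_inj => a; rewrite homM_conv_s.
under eq_bigr do rewrite endM_conv_id.
exact: (conv_antipode_r_cancel hs hsR (klin_homM P)).
Qed.

(* If r = n, a right antipode is also a left antipode on A_{x,y}: conv_id
   is then a split epimorphism between free modules of equal rank, so
   conv_s inverts it; applied to a |-> eps(a) 1_y this is the claim. *)
Lemma antipode_r_of_rank (hsL : antipode_l s) (rn : r = n) a :
  \sum_(p <- cmul C x y a) m (s p.1) p.2 = counit C x y a *: idm C y.
Proof.
have h1 : has_rank 'M[k]_(r, r) (r * n) by rewrite -rn; exact: has_rank_mx.
have RL := split_epi_same_rank_inv (has_rank_mx k r n) h1 klin_conv_id klin_conv_s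
  (conv_idK hsL).
have heps : klinear (fun b : A x y => counit C x y b *: idm C y).
  by move=> c u v; rewrite epsD epsZ scalerDl scalerA.
have [eta heta] := homM_surj heps.
have conv_eta : conv_id eta = 1%:M.
  apply: endM_inj => b; rewrite endM_conv_id /endM mulmx1 g1K.
  under eq_bigr do rewrite heta compZr compm1.
  exact: counitR.
rewrite -heta -(RL eta) conv_eta homM_conv_s.
by apply: eq_bigr => p _; rewrite /endM mulmx1 g1K.
Qed.

(* With a two-sided antipode, conv_id is an isomorphism, so r * n = r * r. *)
Lemma antipode_rank_eq (hsL : antipode_l s) (hsR : antipode_r s)
  (nz : (1 : k) != 0) : (r * n = r * r)%N.
Proof.
exact: (iso_rank_eq (has_rank_mx k r n) (has_rank_mx k r r) klin_conv_id klin_conv_s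
  (conv_sK hsR) (conv_idK hsL) nz).
Qed.

End WithAntipode.
End ConvolutionMatrices.

Section RankConditions.
Variables (k : comPzRingType) (X : Type) (C : semiHopfCat k X).
Local Notation A := (Ahom C).
Local Notation m := (comp C _ _ _).

Lemma Hopf_of_same_rank : (exists t, left_integral C t /\ right_nonsingular C t) ->
  same_rank_cond C -> is_Hopf C.
Proof.
move=> [t [ht hnt]] hsr.
have [s [hs hsL]] := antipode_l_of_left_integral ht hnt.
exists s; split=> //; split=> // x y a.
have [->|nz] := eqVneq a 0.
  rewrite eps0 scale0r (sweedler0 (F := fun u v => m (s _ _ u) v)) //.
  split=> [v|u] c a1 b1 /=; first by rewrite (klinD (hs _ _)) (klinZ (hs _ _)) compDl compZl.
  by rewrite compDr compZr.
have [n [/has_rank_iso[f1 [g1 [hf1 _ f1K g1K]]] /has_rank_iso[f2 [g2 [hf2 _ f2K g2K]]]]]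
  := hsr x y (ex_intro _ a nz).
exact: (antipode_r_of_rank hf1 hf2 f1K g1K f2K g2K hs hsL erefl).
Qed.

Lemma same_rank_of_Hopf (hk : forall M : lmodType k, fg_projective M -> free_fin M)
  (hfg : forall x y, fg_projective (A x y)) : is_Hopf C -> same_rank_cond C.
Proof.
move=> [s [hs [hsL hsR]]] x y [a nz].
have [r hr] := hk _ (hfg x y); have [n hn] := hk _ (hfg y y).
have [f1 [g1 [hf1 _ f1K g1K]]] := has_rank_iso hr.
have [f2 [g2 [hf2 _ f2K g2K]]] := has_rank_iso hn.
have nz1 : (1 : k) != 0.
  by apply/eqP => e; move: nz; rewrite (trivial_ring_eq0 e a) eqxx.
have rpos : (0 < r)%N.
  case: r hr f1 hf1 g1 f1K g1K => // _ f1 hf1 g1 f1K g1K.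
  by move: nz; rewrite -(g1K a) (thinmx0 (g1 a)) (klin0 hf1) eqxx.
have e := antipode_rank_eq hf1 hf2 f1K g1K f2K g2K hs hsL hsR nz1.
have nr : n = r by apply/eqP; rewrite -(eqn_pmul2l rpos) e.
by exists r; split=> //; rewrite -nr.
Qed.

End RankConditions.

Ltac scal_ring := rewrite ?mulrDl ?mulrDr ?scalerDr ?scalerDl; rewrite ?scalerA;
  congr (_ + _); try (congr (_ *: _); ring).

(* With a basis (eb i) of H and dual basis
   (ed i), int_proj h = sum_i hit (eb i * h) (ed i o s) is a projection of H
   onto its module of left integrals, and every h in H is reconstructed
   from the integrals int_proj (eb i * h) (int_proj_reconstruct).  This is
   the fundamental theorem of Hopf modules in the form needed below. *)
Section IntegralProjection.
Variables (k : comPzRingType) (X : Type) (C : semiHopfCat k X).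
Local Notation A := (Ahom C).
Local Notation m := (comp C _ _ _).
Variable s : forall x y, A x y -> A y x.
Hypothesis hs : forall x y, klinear (@s x y).
Hypotheses (hsL : antipode_l s) (hsR : antipode_r s).
Variable y : X.
Local Notation H := (A y y).
Local Notation del := (cmul C y y).
Local Notation eps := (counit C y y).

Let s_anti := antipode_anti hs hsL hsR.
Let sD := antipodeD hs.
Let sZ := antipodeZ hs.

Definition hit (w : H) (phi : H -> k) : H := \sum_(p <- del w) phi (s p.2) *: p.1.

Lemma hit_bilinear (phi : H -> k) : kform phi -> kbilinear (fun u v : H => phi (s v) *: u).
Proof.
move=> hphi; split=> [v|u] c a b /=; first by rewrite scalerDr scalerA mulrC -scalerA.
by rewrite sD sZ (kformD hphi) (kformZ hphi) scalerDl scalerA.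
Qed.

Lemma hit_lin (phi : H -> k) : kform phi -> klinear (fun w => hit w phi).
Proof. by move=> hphi; exact: (sweedler_klinear (hit_bilinear hphi)). Qed.

Lemma hit_ext w (phi psi : H -> k) : (forall u, phi u = psi u) -> hit w phi = hit w psi.
Proof. by move=> e; apply: eq_bigr => p _; rewrite e. Qed.

Lemma hit_sumform I (r : seq I) (phi : I -> H -> k) w :
  hit w (fun u => \sum_(i <- r) phi i u) = \sum_(i <- r) hit w (phi i).
Proof. by rewrite /hit; under eq_bigr do rewrite scaler_suml; rewrite exchange_big. Qed.

Lemma hit_scalform (c : k) (phi : H -> k) w : hit w (fun u => c * phi u) = c *: hit w phi.
Proof. by rewrite /hit scaler_sumr; apply: eq_bigr => p _; rewrite scalerA. Qed.

Lemma hit_formcomb I (r : seq I) (c : I -> k) (phi : I -> H -> k) w :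
  hit w (fun u => \sum_(i <- r) c i * phi i u) = \sum_(i <- r) c i *: hit w (phi i).
Proof.
rewrite hit_sumform; apply: eq_bigr => i _.
by rewrite -hit_scalform.
Qed.

Lemma hit_hit w (g f : H -> k) : kform g -> kform f ->
  hit (hit w g) f = \sum_(q <- del w) \sum_(p <- del q.2) (g (s p.2) * f (s p.1)) *: q.1.
Proof.
move=> hg hf; rewrite /hit (klin_sum (sweedler_klinear (hit_bilinear hf))).
under eq_bigr do rewrite (klinZ (sweedler_klinear (hit_bilinear hf))) /= scaler_sumr.
under eq_bigr do under eq_bigr do rewrite scalerA.
pose F := fun u1 u2 u3 : H => (g (s u3) * f (s u2)) *: u1.
have hF : ktrilinear F.
  rewrite /F; split; [|split] => ? ? c u v /=.
  - by scal_ring.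
  - by rewrite sD sZ (kformD hf) (kformZ hf); scal_ring.
  - by rewrite sD sZ (kformD hg) (kformZ hg); scal_ring.
by have := coassoc_sum hF w; rewrite /F => ->.
Qed.

Lemma comp_hit (f : H -> k) : kform f -> forall (a w : H),
  m a (hit w f) = \sum_(q <- del a) hit (m q.1 w) (fun u => f (m u q.2)).
Proof.
move=> hf a w; symmetry.
transitivity (\sum_(q <- del a) \sum_(q' <- del q.1) \sum_(p <- del w)
   f (m (s (m q'.2 p.2)) q.2) *: m q'.1 p.1).
  apply: eq_bigr => q _; rewrite /hit.
  rewrite (cmul_comp_sum (F := fun U V => f (m (s V) q.2) *: U)) //.
  split=> [V|U] c u v /=; first by rewrite scalerDr scalerA mulrC -scalerA.
  by rewrite sD sZ compDl compZl (kformD hf) (kformZ hf) scalerDl scalerA.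
pose F := fun u1 u2 u3 : H => \sum_(p <- del w) f (m (s (m u2 p.2)) u3) *: m u1 p.1.
have hF : ktrilinear F.
  rewrite /F; split; [|split] => ? ? c u v; split_sums.
  - by rewrite compDl compZl scalerDr scalerA mulrC -scalerA.
  - by rewrite compDl compZl sD sZ compDl compZl (kformD hf) (kformZ hf) scalerDl scalerA.
  - by rewrite compDr compZr (kformD hf) (kformZ hf) scalerDl scalerA.
have := coassoc_sum hF a; rewrite /F => ->.
transitivity (\sum_(q <- del a) \sum_(p <- del w)
   f (m (s p.2) (\sum_(q' <- del q.2) m (s q'.1) q'.2)) *: m q.1 p.1).
  apply: eq_bigr => q _; rewrite exchange_big; apply: eq_bigr => p _.
  rewrite comp_sumr (kform_sum hf) scaler_suml; apply: eq_bigr => q' _.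
  by rewrite s_anti compA.
under eq_bigr do under eq_bigr do rewrite hsR compZr compm1 (kformZ hf) -scalerA.
under eq_bigr do rewrite -scaler_sumr.
rewrite -[in RHS](counitR_lin (G := fun u => m u (hit w f))); last first.
  by move=> c u v; rewrite compDl compZl.
apply: eq_bigr => q _; congr (_ *: _); rewrite /hit comp_sumr; apply: eq_bigr => p _.
by rewrite compZr.
Qed.

Definition is_lint (t : H) := forall a : H, m a t = eps a *: t.

Lemma comp_hit_lint t (f : H -> k) : is_lint t -> kform f -> forall h,
  m h (hit t f) = hit t (fun u => f (m u h)).
Proof.
move=> ht hf h; rewrite (comp_hit hf).
have hfq : forall q : H, kform (fun u => f (m u q)).
  by move=> q c u v; rewrite compDl compZl (kformD hf) (kformZ hf).
under eq_bigr do rewrite ht (klinZ (hit_lin (hfq _))).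
rewrite -hit_formcomb; apply: hit_ext => u.
apply: (counitL_form (G := fun v => f (m u v))).
by move=> c a b; rewrite compDr compZr (kformD hf) (kformZ hf).
Qed.

Variables (n : nat) (f : 'rV[k]_n -> H) (g : H -> 'rV[k]_n).
Hypotheses (hf : klinear f) (fK : cancel f g) (gK : cancel g f).
Local Notation e i := (eb f i).
Local Notation e' i := (ed g i).
Let hed i : kform (e' i) := ed_form hf fK gK i.
Let expd := expand hf gK.
Let expdf := expand_form hf gK.

Lemma ed_antipode_form i : kform (fun u => e' i (s u)).
Proof. by move=> c u v; rewrite sD sZ (kformD (hed i)) (kformZ (hed i)). Qed.

Definition int_proj (h : H) : H := \sum_i hit (m (e i) h) (fun u => e' i (s u)).

Lemma int_proj_lin : klinear int_proj.
Proof.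
move=> c u v; rewrite /int_proj scaler_sumr -big_split; apply: eq_bigr => i _ /=.
by rewrite compDr compZr (hit_lin (ed_antipode_form i)).
Qed.

(* int_proj lands in the integrals: the factor a_(1) coming from comp_hit is
   moved onto the dual basis, where it meets s(a_(2)). *)
Lemma int_proj_lint h : is_lint (int_proj h).
Proof.
move=> a; rewrite /int_proj comp_sumr.
under eq_bigr do rewrite (comp_hit (ed_antipode_form _)).
rewrite exchange_big /=.
transitivity (\sum_(q <- del a) \sum_i
   hit (m (e i) h) (fun u => e' i (m q.1 (m (s q.2) (s u))))).
  apply: eq_bigr => q _.
  transitivity (\sum_i hit (m (m q.1 (e i)) h) (fun u => e' i (m (s q.2) (s u)))).
    by apply: eq_bigr => i _; rewrite compA; apply: hit_ext => u; rewrite s_anti.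
  apply: (dual_basis_transpose hf fK gK
    (G := fun phi v => hit (m v h) (fun u => phi (m (s q.2) (s u)))) (L := fun v => m q.1 v)).
  - by move=> c u v; rewrite compDr compZr.
  - move=> i c u v /=; rewrite compDl compZl.
    apply: (hit_lin (phi := fun u => e' i (m (s q.2) (s u)))).
    by move=> c' u' v'; rewrite sD sZ compDr compZr (kformD (hed i)) (kformZ (hed i)).
  - by move=> c v /=; rewrite hit_formcomb.
rewrite exchange_big /= scaler_sumr; apply: eq_bigr => i _.
rewrite -hit_sumform -hit_scalform; apply: hit_ext => u.
rewrite -(kform_sum (hed i)).
under eq_bigr do rewrite -compA.
by rewrite -comp_suml hsL compZl comp1m (kformZ (hed i)).
Qed.

(* int_proj fixes the integrals, since eps(s(u)) = eps(u). *)
Lemma int_proj_id t : is_lint t -> int_proj t = t.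
Proof.
move=> ht; rewrite /int_proj; under eq_bigr do rewrite ht (klinZ (hit_lin (ed_antipode_form _))).
rewrite -hit_formcomb.
transitivity (hit t (fun u => eps (s u))).
  apply: hit_ext => u; rewrite (expdf (counit_lin _ _ C y y)).
  by apply: eq_bigr => i _; rewrite mulrC.
rewrite /hit; under eq_bigr do rewrite !(counit_antipode hs hsL).
exact: counitR.
Qed.

Lemma int_proj_hit_lint t (g0 : H -> k) : is_lint t -> kform g0 ->
  int_proj (hit t g0) = g0 (idm C y) *: t.
Proof.
move=> ht hg0; rewrite /int_proj.
have hg1 : forall i, kform (fun u => g0 (m u (e i))).
  by move=> i c u v; rewrite compDl compZl (kformD hg0) (kformZ hg0).
under eq_bigr do rewrite (comp_hit_lint ht hg0) (hit_hit _ (hg1 _) (ed_antipode_form _)).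
rewrite exchange_big; under eq_bigr do rewrite exchange_big.
under eq_bigr do under eq_bigr do rewrite -scaler_suml.
transitivity (\sum_(q <- del t) (eps q.2 * g0 (idm C y)) *: q.1).
  apply: eq_bigr => q _.
  transitivity (\sum_(p <- del q.2) g0 (s (m (s p.1) p.2)) *: q.1).
    apply: eq_bigr => p _; congr (_ *: _).
    have hg2 : kform (fun v => g0 (m (s p.2) v)).
      by move=> c u v; rewrite compDr compZr (kformD hg0) (kformZ hg0).
    by rewrite s_anti (expdf hg2); apply: eq_bigr => i _; rewrite mulrC.
  rewrite -scaler_suml -(kform_sum hg0) -(klin_sum (@hs _ _)) hsR sZ.
  by rewrite (antipode_idm hs hsR) (kformZ hg0).
under eq_bigr do rewrite mulrC -scalerA.
by rewrite -scaler_sumr (counitR _ _ C).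
Qed.

Lemma int_proj_hit t (f0 : H -> k) : is_lint t -> kform f0 -> forall h,
  int_proj (m h (hit t f0)) = f0 h *: t.
Proof.
move=> ht hf0 h; rewrite (comp_hit_lint ht hf0) int_proj_hit_lint ?comp1m //.
by move=> c u v; rewrite compDl compZl (kformD hf0) (kformZ hf0).
Qed.

(* The integrand of the reconstruction formula, with a bilinear form be in
   place of the product of two dual basis forms. *)
Definition hit2 (h : H) (be : H -> H -> k) (v : H) : H :=
  \sum_(q <- del (m v h)) \sum_(p <- del q.2) be (s (s p.2)) (s p.1) *: q.1.

Lemma hit2_lin h (be : H -> H -> k) : (forall b, kform (be ^~ b)) -> (forall a, kform (be a)) ->
  klinear (hit2 h be).
Proof.
move=> hb1 hb2.
have hF2 : forall U : H, kbilinear (fun a b : H => be (s (s b)) (s a) *: U).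
  move=> U; split=> [b|a] c u v /=.
    by rewrite sD sZ (kformD (hb2 _)) (kformZ (hb2 _)) scalerDl scalerA.
  by rewrite !sD !sZ (kformD (hb1 _)) (kformZ (hb1 _)) scalerDl scalerA.
have hF : kbilinear (fun U V : H => \sum_(p <- del V) be (s (s p.2)) (s p.1) *: U).
  split=> [V|U] c u v /=; last exact: (sweedler_klinear (hF2 U)).
  by rewrite scaler_sumr -big_split; apply: eq_bigr => p _ /=; scal_ring.
by move=> c u v; rewrite /hit2 compDl compZl; exact: (sweedler_klinear hF).
Qed.

Lemma hit2_formcomb h (c : 'I_n -> 'I_n -> k) v :
  hit2 h (fun a b => \sum_j \sum_i c j i * (e' j a * e' i b)) v =
  \sum_j \sum_i c j i *: hit2 h (fun a b => e' j a * e' i b) v.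
Proof.
rewrite /hit2.
transitivity (\sum_(q <- del (m v h)) \sum_(p <- del q.2) \sum_j \sum_i
   (c j i * (e' j (s (s p.2)) * e' i (s p.1))) *: q.1).
  apply: eq_bigr => q _; apply: eq_bigr => p _.
  by rewrite scaler_suml; apply: eq_bigr => j _; rewrite scaler_suml.
rewrite exchange_big4; apply: eq_bigr => j _; apply: eq_bigr => i _.
rewrite scaler_sumr; apply: eq_bigr => q _; rewrite scaler_sumr; apply: eq_bigr => p _.
by rewrite scalerA.
Qed.

(* The summand for a fixed dual basis form collapses by the antipode law. *)
Lemma hit2_dual h l : hit2 h (fun a b => e' l (m a b)) (e l) = e' l (idm C y) *: m (e l) h.
Proof.
rewrite /hit2.
transitivity (\sum_(q <- del (m (e l) h)) (eps q.2 * e' l (idm C y)) *: q.1).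
  apply: eq_bigr => q _.
  transitivity (e' l (s (\sum_(p <- del q.2) m p.1 (s p.2))) *: q.1).
    rewrite (klin_sum (@hs _ _)) (kform_sum (hed l)) scaler_suml.
    by apply: eq_bigr => p _; rewrite s_anti.
  by rewrite hsL sZ (antipode_idm hs hsR) (kformZ (hed l)).
under eq_bigr do rewrite mulrC -scalerA.
by rewrite -scaler_sumr (counitR _ _ C).
Qed.

(* Every h is recovered from the integrals int_proj (eb i h): the double
   sum over dual basis forms collapses by dual_basis_transpose2. *)
Lemma int_proj_reconstruct h : \sum_i hit (int_proj (m (e i) h)) (e' i) = h.
Proof.
transitivity (\sum_i \sum_j hit2 h (fun a b => e' j a * e' i b) (m (e j) (e i))).
  apply: eq_bigr => i _; rewrite /int_proj (klin_sum (hit_lin (hed i))).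
  by apply: eq_bigr => j _; rewrite (hit_hit _ (ed_antipode_form j) (hed i)) /hit2 compA.
rewrite exchange_big /= (dual_basis_transpose2 hf fK gK (G := hit2 h) (mu := comp C y y y)).
- under eq_bigr do rewrite hit2_dual -compZl.
  by rewrite -comp_suml -expd comp1m.
- exact: comp_bilin.
- move=> j i; apply: hit2_lin => [b|a] c u v /=.
    by rewrite (kformD (hed j)) (kformZ (hed j)); ring.
  by rewrite (kformD (hed i)) (kformZ (hed i)); ring.
- exact: hit2_formcomb.
Qed.

End IntegralProjection.

(* The submodule of fixed points of a linear endomorphism E; when E is
   idempotent it is a retract of M, hence finitely generated projective
   whenever M is. *)
Section FixedPoints.
Variables (k : comPzRingType) (M : lmodType k) (E : M -> M).
Hypothesis hE : klinear E.

Definition fixed_pred := [pred v : M | E v == v].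

Lemma fixed_pred_closed : subsemimod_closed fixed_pred.
Proof.
split; first split.
- by rewrite inE (klin0 hE).
- by move=> u v; rewrite !inE (klinD hE) => /eqP -> /eqP ->.
- by move=> c u; rewrite !inE (klinZ hE) => /eqP ->.
Qed.

HB.instance Definition _ := GRing.isSubmodClosed.Build k M fixed_pred fixed_pred_closed.
Record fixmod := Fixmod { fix_val :> M; _ : fix_val \in fixed_pred }.
HB.instance Definition _ := [isSub for fix_val].
HB.instance Definition _ := [Choice of fixmod by <:].
HB.instance Definition _ := [SubChoice_isSubLmodule of fixmod by <:].
(* The module structure depends on the linearity of E. *)
Definition fixmod_lmodType : lmodType k := fixmod.

Lemma klin_fix_val : klinear (fix_val : fixmod -> M).
Proof. by []. Qed.

Lemma fix_valD (u v : fixmod) : fix_val (u + v) = fix_val u + fix_val v.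
Proof. by []. Qed.

Lemma fix_valZ c (u : fixmod) : fix_val (c *: u) = c *: fix_val u.
Proof. by []. Qed.

Lemma fix_val_inj : injective fix_val.
Proof. exact: val_inj. Qed.

Lemma fix_valE (u : fixmod) : E u = u.
Proof. by case: u => v /= /eqP. Qed.

Hypothesis hEE : forall v, E (E v) = E v.

Lemma fixed_pred_E v : E v \in fixed_pred.
Proof. by rewrite inE hEE. Qed.

Definition fix_proj (v : M) : fixmod := Fixmod (fixed_pred_E v).

Lemma fix_projE v : fix_val (fix_proj v) = E v.
Proof. by []. Qed.

Lemma klin_fix_proj : klinear fix_proj.
Proof. by move=> c u v; apply: fix_val_inj; rewrite fix_projE fix_valD fix_valZ !fix_projE hE. Qed.

Lemma fixmod_fgp : fg_projective M -> fg_projective fixmod_lmodType.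
Proof.
move=> [n [i [p [hi [hp pi]]]]].
exists n, (fun u => i (fix_val u)), (fun w => fix_proj (p w)); split; last split.
- by apply: klinear_comp => //; exact: klin_fix_val.
- by apply: klinear_comp => //; exact: klin_fix_proj.
- by move=> u; apply: fix_val_inj; rewrite fix_projE pi fix_valE.
Qed.

End FixedPoints.

(* The module of left integrals of H = A_{y,y} is free of rank one, with a
   generator t0 and a form phi such that hit t0 phi = 1.  Proof: the
   integrals are the fixed points of int_proj, a f.g. projective, hence free,
   module of some rank r.  The reconstruction formula and int_proj_hit show
   that (M_{j,l}) |-> sum_j hit (b j) (sum_l M_{j,l} ed l) is an isomorphism
   k^(r*n) ~ H ~ k^n, where (b j) is a basis of the integrals; hence r = 1. *)
Section IntegralGenerator.
Variables (k : comPzRingType) (X : Type) (C : semiHopfCat k X).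
Local Notation A := (Ahom C).
Local Notation m := (comp C _ _ _).
Variable s : forall x y, A x y -> A y x.
Hypothesis hs : forall x y, klinear (@s x y).
Hypotheses (hsL : antipode_l s) (hsR : antipode_r s).
Variable y : X.
Local Notation H := (A y y).

Section FixedBasis.
Variables (n : nat) (f : 'rV[k]_n -> H) (g : H -> 'rV[k]_n).
Hypotheses (hf : klinear f) (fK : cancel f g) (gK : cancel g f).
Local Notation E := (int_proj s f g).
Let hE : klinear E := int_proj_lin hs hf fK gK.
Let hEE v : E (E v) = E v.
Proof. exact: (int_proj_id hs hsL hf fK gK (int_proj_lint hs hsL hsR hf fK gK v)). Qed.
Let hed l : kform (ed g l) := ed_form hf fK gK l.

Lemma fixmod_lint (v : fixmod E) : is_lint (fix_val v).
Proof. by rewrite -(fix_valE v); exact: (int_proj_lint hs hsL hsR hf fK gK). Qed.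

Lemma lint_fixmod t : is_lint t -> t \in fixed_pred E.
Proof. by move=> ht; rewrite inE; apply/eqP; exact: (int_proj_id hs hsL hf fK gK). Qed.

Section IntegralBasis.
Variables (r : nat) (be : 'rV[k]_r -> fixmod_lmodType hE)
  (be' : fixmod_lmodType hE -> 'rV[k]_r).
Hypotheses (hbe : klinear be) (beK : cancel be be') (be'K : cancel be' be).
Let hbe' := klinear_inv hbe beK be'K.
Let b j := fix_val (be (delta_mx 0 j)).

Lemma fix_val_be (w : 'rV[k]_r) : fix_val (be w) = \sum_j w 0 j *: b j.
Proof.
rewrite {1}[w]row_sum_delta (klin_sum hbe) (klin_sum (@klin_fix_val _ _ _ hE)).
by apply: eq_bigr => j _; rewrite (klinZ hbe).
Qed.

Definition lint_coords (h : H) : 'M[k]_(r, n) :=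
  \matrix_(j, l) (be' (fix_proj hEE (m (eb f l) h))) 0 j.
Definition lint_expand (M : 'M[k]_(r, n)) : H :=
  \sum_j hit s (b j) (fun u => \sum_l M j l * ed g l u).

Lemma klin_lint_coords : klinear lint_coords.
Proof.
move=> c u v; apply/matrixP => j l; rewrite !mxE compDr compZr.
rewrite (klinD (klin_fix_proj hE hEE)) (klinZ (klin_fix_proj hE hEE)).
by rewrite (klinD hbe') (klinZ hbe') !mxE.
Qed.

Lemma klin_lint_expand : klinear lint_expand.
Proof.
move=> c M N; rewrite /lint_expand scaler_sumr -big_split; apply: eq_bigr => j _ /=.
rewrite !hit_formcomb scaler_sumr -big_split; apply: eq_bigr => l _ /=.
by rewrite !mxE scalerDl scalerA.
Qed.

(* lint_coords and lint_expand are mutually inverse, by int_proj_hit and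
   int_proj_reconstruct respectively. *)
Lemma lint_coordsK M : lint_coords (lint_expand M) = M.
Proof.
apply/matrixP => j l; rewrite mxE.
suff -> : fix_proj hEE (m (eb f l) (lint_expand M)) = be (\row_j' M j' l).
  by rewrite beK mxE.
apply: fix_val_inj; rewrite fix_projE fix_val_be /lint_expand comp_sumr (klin_sum hE).
apply: eq_bigr => j' _; rewrite mxE.
have hform : kform (fun u => \sum_l0 M j' l0 * ed g l0 u).
  move=> c u v; rewrite mulr_sumr -big_split /=; apply: eq_bigr => l0 _.
  by rewrite (kformD (hed _)) (kformZ (hed _)); ring.
rewrite (int_proj_hit hs hsL hsR hf fK gK (fixmod_lint _) hform); congr (_ *: _).
rewrite (bigD1 l) //= ed_eb // eqxx mulr1 big1 ?addr0 // => l0 nl0.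
by rewrite ed_eb // (negbTE nl0) mulr0.
Qed.

Lemma lint_expandK h : lint_expand (lint_coords h) = h.
Proof.
rewrite /lint_expand.
under eq_bigr do rewrite hit_formcomb.
rewrite exchange_big /= -[RHS](int_proj_reconstruct hs hsL hsR hf fK gK h).
apply: eq_bigr => l _; rewrite -(fix_projE hEE) -[fix_proj _ _]be'K fix_val_be.
rewrite (klin_sum (hit_lin hs (hed l))); apply: eq_bigr => j _.
by rewrite (klinZ (hit_lin hs (hed l))) mxE.
Qed.

(* Comparing ranks, k^(r*n) ~ k^n with n > 0, so r = 1. *)
Lemma lint_rank_one : (1 : k) != 0 -> r = 1%N.
Proof.
move=> nz.
have hrank : has_rank H n by exists f; split=> //; exists g.
have rn := iso_rank_eq (has_rank_mx k r n) hrank klin_lint_expand klin_lint_coords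
  lint_coordsK lint_expandK nz.
have npos : (0 < n)%N.
  case: (posnP n) => [n0|//].
  have e : g (idm C y) = 0 by apply/rowP => i; have := ltn_ord i; rewrite {2}n0.
  by move: nz; rewrite -(idm_counit _ _ C y) -(gK (idm C y)) e (klin0 hf) eps0 eqxx.
by apply/eqP; rewrite -(eqn_pmul2r npos) mul1n rn.
Qed.

End IntegralBasis.

(* With r = 1, the basis vector generates the integrals freely, and the
   coordinates of 1 give the form phi. *)
Lemma lint_generator_of_basis (be : 'rV[k]_1 -> fixmod_lmodType hE)
  (be' : fixmod_lmodType hE -> 'rV[k]_1) :
  klinear be -> cancel be be' -> cancel be' be ->
  exists t0 : H, is_lint t0 /\ (forall t, is_lint t -> exists c, t = c *: t0) /\
  (forall c : k, c *: t0 = 0 -> c = 0) /\ exists phi, kform phi /\ hit s t0 phi = idm C y.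
Proof.
move=> hbe beK be'K; have hbe' := klinear_inv hbe beK be'K.
pose t0 := fix_val (be (delta_mx 0 ord0)).
have coord (v : fixmod E) : fix_val v = (be' v) 0 0 *: t0.
  by rewrite -{1}(be'K v) (fix_val_be hbe) big_ord1.
exists t0; split; first exact: fixmod_lint.
split; first by move=> t ht; exists (be' (Fixmod (lint_fixmod ht)) 0 0); rewrite -coord.
split.
  move=> c h0; have e : be (c *: delta_mx 0 ord0) = 0.
    by apply: fix_val_inj; rewrite (klinZ hbe) fix_valZ h0.
  have := congr1 be' e; rewrite beK (klin0 hbe') => /matrixP /(_ 0 0).
  by rewrite !mxE eqxx mulr1.
exists (fun u => \sum_l (be' (fix_proj hEE (m (eb f l) (idm C y)))) 0 0 * ed g l u); split.
  move=> c u v; rewrite mulr_sumr -big_split /=; apply: eq_bigr => l0 _.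
  by rewrite (kformD (hed _)) (kformZ (hed _)); ring.
rewrite hit_formcomb -[RHS](int_proj_reconstruct hs hsL hsR hf fK gK (idm C y)).
apply: eq_bigr => l _.
by rewrite -(fix_projE hEE) coord (klinZ (hit_lin hs (hed l))).
Qed.

End FixedBasis.

(* Existence of the generator, for H free of finite rank.  Over the zero
   ring everything is zero. *)
Lemma lint_generator (hk : forall M : lmodType k, fg_projective M -> free_fin M)
  (hfg : fg_projective H) :
  exists t0 : H, is_lint t0 /\ (forall t, is_lint t -> exists c, t = c *: t0) /\
  (forall c : k, c *: t0 = 0 -> c = 0) /\ exists phi, kform phi /\ hit s t0 phi = idm C y.
Proof.
have [e1|nz] := eqVneq (1 : k) 0.
  exists 0; split; first by move=> a; rewrite comp0r scaler0.
  split; first by move=> t _; exists 0; rewrite scaler0; exact: trivial_ring_eq0.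
  split; first by move=> c _; rewrite -[c]mulr1 e1 mulr0.
  exists (fun _ => 0); split; first by move=> c u v; rewrite mulr0 addr0.
  by rewrite [LHS](trivial_ring_eq0 e1) [RHS](trivial_ring_eq0 e1).
have [n /has_rank_iso[f [g [hf _ fK gK]]]] := hk _ hfg.
have hEE v : int_proj s f g (int_proj s f g v) = int_proj s f g v.
  exact: (int_proj_id hs hsL hf fK gK (int_proj_lint hs hsL hsR hf fK gK v)).
have [r /has_rank_iso[be [be' [hbe _ beK be'K]]]] :=
  hk _ (fixmod_fgp (int_proj_lin hs hf fK gK) hEE hfg).
have r1 := lint_rank_one hbe beK be'K nz; subst r.
exact: (lint_generator_of_basis hbe beK be'K).
Qed.

End IntegralGenerator.

Section IntegralFamily.
Variables (k : comPzRingType) (X : Type) (C : semiHopfCat k X).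
Local Notation A := (Ahom C).
Local Notation m := (comp C _ _ _).
Variable s : forall x y, A x y -> A y x.
Hypothesis hs : forall x y, klinear (@s x y).
Hypotheses (hsL : antipode_l s) (hsR : antipode_r s).
Hypothesis hk : forall M : lmodType k, fg_projective M -> free_fin M.
Hypothesis hfg : forall x y, fg_projective (A x y).

Let s_anti := antipode_anti hs hsL hsR.
Let sD := antipodeD hs.
Let sZ := antipodeZ hs.

(* Each A_{x,y} is zero or contains an element of counit 1: the coproduct of
   a basis vector e, paired with its dual form, gives eps(e_(1)) e*(e_(2)) = 1. *)
Lemma counit_one x y : exists a0 : A x y, (forall b : A x y, b = 0) \/ counit C x y a0 = 1.
Proof.
have [r /has_rank_iso[f [g [hf _ fK gK]]]] := hk (hfg x y).
move: f hf g fK gK; case: r => [|r] f hf g fK gK.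
  by exists 0; left => b; rewrite -(gK b) (thinmx0 (g b)) (klin0 hf).
exists (\sum_(p <- cmul C x y (eb f ord0)) ed g ord0 p.2 *: p.1); right.
rewrite eps_sum.
transitivity (ed g ord0 (\sum_(p <- cmul C x y (eb f ord0)) counit C x y p.1 *: p.2)).
  rewrite (kform_sum (ed_form hf fK gK ord0)); apply: eq_bigr => p _.
  by rewrite epsZ (kformZ (ed_form hf fK gK ord0)) mulrC.
by rewrite (counitL _ _ C) ed_eb // eqxx.
Qed.

Lemma comp_lint_counit y (t : A y y) (ht : is_lint t) z (a0 : A z y)
  (ha0 : counit C z y a0 = 1) (b : A z y) :
  m b t = counit C z y b *: m a0 t.
Proof.
rewrite -[in LHS](counitR_lin (G := fun u => m u t)); last by move=> c u v; rewrite compDl compZl.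
transitivity (\sum_(p <- cmul C z y b) m (m p.1 (s p.2)) (m a0 t)).
  apply: eq_bigr => p _.
  have e : m (m (s p.2) a0) t = counit C z y p.2 *: t.
    by rewrite ht comp_counit (counit_antipode hs hsL) ha0 mulr1.
  by rewrite compA -(compA _ _ C _ _ _ _ (s p.2) a0 t) e compZr.
by rewrite -comp_suml hsL compZl comp1m.
Qed.

Lemma left_integral_spread (t0 : forall y, A y y) (ht0 : forall y, is_lint (t0 y))
  (a : forall x y, A x y)
  (ha : forall x y, (forall b : A x y, b = 0) \/ counit C x y (a x y) = 1) :
  left_integral C (fun x y => m (a x y) (t0 y)) /\ (forall y, m (a y y) (t0 y) = t0 y).
Proof.
split; last first.
  move=> y; case: (ha y y) => [z0|e1]; first by rewrite (z0 (t0 y)) comp0r.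
  by rewrite ht0 e1 scale1r.
move=> x y z b /=.
case: (ha x y) => [z0|e1].
  rewrite (z0 (a x y)) comp0l comp0r.
  case: (ha z y) => [z1|e2]; first by rewrite (z1 (a z y)) comp0l scaler0.
  suff -> : counit C z x b = 0 by rewrite scale0r.
  have := congr1 (counit C x y) (z0 (m (s b) (a z y))).
  by rewrite comp_counit (counit_antipode hs hsL) e2 mulr1 eps0.
rewrite -compA.
case: (ha z y) => [z1|e2].
  by rewrite (z1 (m b (a x y))) (z1 (a z y)) !comp0l scaler0.
by rewrite (comp_lint_counit (ht0 y) e2) comp_counit e1 mulr1.
Qed.

(* For a left integral family T, the elements T_(1) (x) s(T_(2)) form a
   Casimir family: a T_{x,y(1)} (x) s(T_{x,y(2)}) = T_{z,y(1)} (x) s(T_{z,y(2)}) a. *)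
Lemma casimir_sum (T : forall x y, A x y) (hT : left_integral C T) x y z (a : A z x)
  (P : lmodType k) (F : A z y -> A y x -> P) : kbilinear F ->
  \sum_(p <- cmul C x y (T x y)) F (m a p.1) (s p.2) =
  \sum_(p <- cmul C z y (T z y)) F p.1 (m (s p.2) a).
Proof.
move=> [hF1 hF2].
have hG : klinear (fun u : A z x => \sum_(p <- cmul C x y (T x y)) F (m u p.1) (s p.2)).
  move=> c u v; rewrite scaler_sumr -big_split; apply: eq_bigr => p _ /=.
  by rewrite compDl compZl (klinD (hF1 _)) (klinZ (hF1 _)).
rewrite -(counitR_lin hG a).
transitivity (\sum_(q <- cmul C z x a) \sum_(q' <- cmul C z x q.2)
   \sum_(p <- cmul C x y (T x y)) F (m q.1 p.1) (m (s (m q'.1 p.2)) q'.2)).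
  apply: eq_bigr => q _; rewrite exchange_big scaler_sumr; apply: eq_bigr => p _.
  rewrite -(klinZ (hF2 _)) -(klin_sum (hF2 _)); congr (F _ _).
  rewrite -[X in _ *: X]compm1 -compZr -hsR comp_sumr; apply: eq_bigr => q' _.
  by rewrite s_anti compA.
pose Phi := fun u1 u2 u3 : A z x =>
  \sum_(p <- cmul C x y (T x y)) F (m u1 p.1) (m (s (m u2 p.2)) u3).
have hPhi : ktrilinear Phi.
  rewrite /Phi; split; [|split] => ? ? c u v; split_sums.
  - by rewrite compDl compZl (klinD (hF1 _)) (klinZ (hF1 _)).
  - by rewrite compDl compZl sD sZ compDl compZl (klinD (hF2 _)) (klinZ (hF2 _)).
  - by rewrite compDr compZr (klinD (hF2 _)) (klinZ (hF2 _)).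
rewrite -(coassoc_sum hPhi a) /Phi.
have hG2 : klinear (fun v : A z x => \sum_(p <- cmul C z y (T z y)) F p.1 (m (s p.2) v)).
  move=> c u v; rewrite scaler_sumr -big_split; apply: eq_bigr => p _ /=.
  by rewrite compDr compZr (klinD (hF2 _)) (klinZ (hF2 _)).
rewrite -(counitL_lin hG2 a); apply: eq_bigr => q _.
have hF' : kbilinear (fun U V : A z y => F U (m (s V) q.2)).
  split=> [V|U] c u v /=; first by rewrite (klinD (hF1 _)) (klinZ (hF1 _)).
  by rewrite sD sZ compDl compZl (klinD (hF2 _)) (klinZ (hF2 _)).
rewrite -(cmul_comp_sum hF') hT.
by rewrite (sweedlerZ (F := fun U V => F U (m (s V) q.2))).
Qed.

Section NonSingular.
Variable T : forall x y, A x y.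
Hypothesis hT : left_integral C T.
Variable y : X.
Variable phi : A y y -> k.
Hypothesis hphi : kform phi.
Hypothesis hN : \sum_(p <- cmul C y y (T y y)) phi (s p.2) *: p.1 = idm C y.
Local Notation del := (cmul C y y).

(* Right non-singularity: h = T_(1) phi(s(T_(2)) h), from the Casimir
   property applied to h and the normalization of phi. *)
Lemma lint_right_nonsingular h : \sum_(p <- del (T y y)) phi (m (s p.2) h) *: p.1 = h.
Proof.
rewrite -(casimir_sum hT h (F := fun U V => phi V *: U)); last first.
  split=> [V|U] c u v /=; first by rewrite scalerDr scalerA mulrC -scalerA.
  by rewrite (kformD hphi) (kformZ hphi) scalerDl scalerA.
transitivity (m h (\sum_(p <- del (T y y)) phi (s p.2) *: p.1)).
  by rewrite comp_sumr; apply: eq_bigr => p _; rewrite compZr.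
by rewrite hN compm1.
Qed.

(* phi(T_(1)) s(T_(2)) = 1: the map h |-> (phi(eb l h))_l is a section of
   w |-> T_(1) (sum_l w_l ed l (s T_(2))), hence (equal ranks) its inverse;
   comparing coordinates gives the claim. *)
Lemma lint_frobenius : \sum_(p <- del (T y y)) phi p.1 *: s p.2 = idm C y.
Proof.
have [n /has_rank_iso[f [g [hf _ fK gK]]]] := hk (hfg y y).
have hed := ed_form hf fK gK.
pose Ph := fun w : 'rV[k]_n =>
  \sum_(p <- del (T y y)) (\sum_l w 0 l * ed g l (s p.2)) *: p.1.
pose Ps := fun h : A y y => \row_l phi (m (eb f l) h).
have hPh : klinear Ph.
  move=> c u v; rewrite /Ph scaler_sumr -big_split; apply: eq_bigr => p _ /=.
  rewrite scalerA -scalerDl; congr (_ *: _).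
  by rewrite mulr_sumr -big_split; apply: eq_bigr => l _ /=; rewrite !mxE; ring.
have hPs : klinear Ps.
  by move=> c u v; apply/rowP => l; rewrite !mxE compDr compZr (kformD hphi) (kformZ hphi).
have PhPs h : Ph (Ps h) = h.
  rewrite /Ph -[RHS]lint_right_nonsingular; apply: eq_bigr => p _; congr (_ *: _).
  rewrite [in RHS](expand hf gK (s p.2)) comp_suml (kform_sum hphi).
  by apply: eq_bigr => l _; rewrite mxE compZl (kformZ hphi) mulrC.
have hrk1 : has_rank 'rV[k]_n n by exists id; split=> //; exists id.
have hrk2 : has_rank (A y y) n by exists f; split=> //; exists g.
have PsPh := split_epi_same_rank_inv hrk1 hrk2 hPh hPs PhPs.
have phi_Ph w u : phi (m u (Ph w)) = \sum_l ed g l u * w 0 l.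
  rewrite {1}(expand hf gK u) comp_suml (kform_sum hphi).
  apply: eq_bigr => l _; rewrite compZl (kformZ hphi); congr (_ * _).
  by have := PsPh w; move/rowP => /(_ l); rewrite mxE.
rewrite [RHS](expand hf gK) [LHS](expand hf gK); apply: eq_bigr => l _.
congr (_ *: _).
transitivity (phi (Ph (delta_mx 0 l))).
  rewrite (kform_sum (hed l)) /Ph (kform_sum hphi); apply: eq_bigr => p _.
  by rewrite (kformZ (hed l)) (kformZ hphi) sum_delta_rV mulrC.
rewrite -[Ph _]comp1m phi_Ph; under eq_bigr do rewrite mulrC.
exact: (sum_delta_rV (fun i => ed g i (idm C y))).
Qed.

Lemma antipode_lint_frobenius h :
  s (\sum_(p <- del (T y y)) phi (m h p.1) *: p.2) = h.
Proof.
rewrite (klin_sum (@hs _ _)); under eq_bigr do rewrite sZ.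
rewrite (casimir_sum hT h (F := fun U V => phi U *: V)); last first.
  split=> [V|U] c u v /=; last by rewrite scalerDr scalerA mulrC -scalerA.
  by rewrite (kformD hphi) (kformZ hphi) scalerDl scalerA.
transitivity (m (\sum_(p <- del (T y y)) phi p.1 *: s p.2) h).
  by rewrite comp_suml; apply: eq_bigr => p _; rewrite compZl.
by rewrite lint_frobenius comp1m.
Qed.

(* s is bijective on A_{y,y}, since it has a right inverse between free
   modules of equal rank; this gives left non-singularity. *)
Lemma lint_left_nonsingular a : \sum_(p <- del (T y y)) phi (m (s a) p.1) *: p.2 = a.
Proof.
have [n hrk] := hk (hfg y y).
pose R := fun h : A y y => \sum_(p <- del (T y y)) phi (m h p.1) *: p.2.
have hR : klinear R.
  move=> c u v; rewrite /R scaler_sumr -big_split; apply: eq_bigr => p _ /=.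
  by rewrite compDl compZl (kformD hphi) (kformZ hphi) scalerDl scalerA.
exact: (split_epi_same_rank_inv hrk hrk (@hs y y) hR antipode_lint_frobenius a).
Qed.

End NonSingular.

Lemma lint_family : exists (T : forall x y, A x y) (phi : forall y, A y y -> k),
  [/\ left_integral C T, forall y, kform (phi y),
      forall y, \sum_(p <- cmul C y y (T y y)) phi y (s p.2) *: p.1 = idm C y
    & forall z, lint_iso_k C z].
Proof.
have [d hd] := @dchoice X (fun y => (A y y * (A y y -> k))%type)
  (fun y d => is_lint d.1 /\ (forall t, is_lint t -> exists c, t = c *: d.1) /\
    (forall c : k, c *: d.1 = 0 -> c = 0) /\ kform d.2 /\ hit s d.1 d.2 = idm C y)
  (fun y => let: ex_intro t0 (conj h1 (conj h2 (conj h3 (ex_intro phi (conj h4 h5))))) :=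
     lint_generator hs hsL hsR hk (hfg y y) in
     ex_intro _ (t0, phi) (conj h1 (conj h2 (conj h3 (conj h4 h5))))).
have [a ha] := @dchoice X (fun x => forall y, A x y)
  (fun x ax => forall y, (forall b : A x y, b = 0) \/ counit C x y (ax y) = 1)
  (fun x => @dchoice X (fun y => A x y) _ (fun y => counit_one x y)).
pose T := fun x y => m (a x y) (d y).1.
have [hT hTy] := left_integral_spread (fun y => (hd y).1) ha.
exists T, (fun y => (d y).2); split=> //.
- by move=> y; exact: (hd y).2.2.2.1.
- by move=> y; rewrite /T hTy; exact: (hd y).2.2.2.2.
move=> z; exists (fun y => T y z); split; first by move=> x y b; exact: hT.
split.
  move=> t ht.
  have [c hc] := (hd z).2.1 _ (fun b => ht z z b).
  exists c => y; case: (ha y z) => [z0|e1]; first by rewrite (z0 (t y)) (z0 (T y z)) scaler0.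
  by rewrite -[t y]scale1r -e1 -ht hc compZr.
by move=> c h0; apply: (hd z).2.2.1; have := h0 z; rewrite /T hTy.
Qed.

End IntegralFamily.

Section HopfConsequences.
Variables (k : comPzRingType) (X : Type) (C : semiHopfCat k X).
Local Notation A := (Ahom C).
Local Notation m := (comp C _ _ _).
Hypothesis hk : forall M : lmodType k, fg_projective M -> free_fin M.
Hypothesis hfg : forall x y, fg_projective (A x y).

Lemma Hopf_lint_family : is_Hopf C ->
  exists T : forall x y, A x y, left_integral C T /\ nonsingular C T /\
    is_Frobenius C /\ (forall x, lint_iso_k C x).
Proof.
move=> [s [hs [hsL hsR]]].
have [T [phi [hT hphi hN hiso]]] := lint_family hs hsL hsR hk hfg.
have sD := antipodeD hs; have sZ := antipodeZ hs.
exists T; split=> //; split; last split=> //.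
  split=> x.
    exists (fun a u => phi x (m (s _ _ a) u)); split.
      by move=> a0 c u v; rewrite compDr compZr (kformD (hphi x)) (kformZ (hphi x)).
    split; first by move=> c a1 b1 u; rewrite sD sZ compDl compZl (kformD (hphi x)) (kformZ (hphi x)).
    exact: (lint_left_nonsingular hs hsL hsR hk hfg hT (hphi x) (hN x)).
  exists (fun a u => phi x (m (s _ _ u) a)); split.
    by move=> a0 c u v; rewrite sD sZ compDl compZl (kformD (hphi x)) (kformZ (hphi x)).
  split; first by move=> c a1 b1 u; rewrite compDr compZr (kformD (hphi x)) (kformZ (hphi x)).
  exact: (lint_right_nonsingular hs hsL hsR hT (hphi x) (hN x)).
exists (fun x y => [seq (p.1, s _ _ p.2) | p <- cmul C x y (T x y)]), phi.
split.
  move=> x y z a0 P F hF; rewrite -!map_comp !big_map /=.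
  exact: (casimir_sum hs hsL hsR hT a0 hF).
split=> //; split=> x; rewrite big_map /=; last exact: hN.
exact: (lint_frobenius hs hsL hsR hk hfg hT (hphi x) (hN x)).
Qed.

End HopfConsequences.

(* It exchanges left and right
   integral families, so right-handed statements follow from left-handed
   ones. *)
Section OppositeCoopposite.
Variables (k : comPzRingType) (X : Type) (C : semiHopfCat k X).
Local Notation A := (Ahom C).

Definition oA (x y : X) : lmodType k := A y x.
Definition ocomp x y z (a : oA x y) (b : oA y z) : oA x z := comp C z y x b a.
Definition oidm x : oA x x := idm C x.
Definition ocmul x y (a : oA x y) : seq (oA x y * oA x y) :=
  [seq (p.2, p.1) | p <- cmul C y x a].
Definition ocounit x y (a : oA x y) : k := counit C y x a.

Lemma kbilinear_flip (M N P : lmodType k) (F : M -> N -> P) :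
  kbilinear F -> kbilinear (fun u v => F v u).
Proof. by case=> h1 h2; split. Qed.

Lemma ocomp_bilin x y z : kbilinear (@ocomp x y z).
Proof. exact: (kbilinear_flip (comp_bilin _ _ C z y x)). Qed.

Lemma ocompA x y z w (a : oA x y) (b : oA y z) (c : oA z w) :
  ocomp (ocomp a b) c = ocomp a (ocomp b c).
Proof. by rewrite /ocomp compA. Qed.

Lemma ocomp1m x y (a : oA x y) : ocomp (oidm x) a = a.
Proof. exact: compm1. Qed.
Lemma ocompm1 x y (a : oA x y) : ocomp a (oidm y) = a.
Proof. exact: comp1m. Qed.

Lemma ocmul_lin x y (c : k) (a b : oA x y) :
  teq2 (ocmul (c *: a + b)) ([seq (c *: p.1, p.2) | p <- ocmul a] ++ ocmul b).
Proof.
move=> P F hF; rewrite /ocmul big_cat !big_map /=.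
rewrite (cmul_lin _ _ C y x c a b P _ (kbilinear_flip hF)) big_cat !big_map /=.
by congr (_ + _); apply: eq_bigr => p _; rewrite (klinZ (hF.1 _)) (klinZ (hF.2 _)).
Qed.

Lemma ocoassoc x y (a : oA x y) :
  teq3 [seq (q.1, q.2, p.2) | p <- ocmul a, q <- ocmul p.1]
       [seq (p.1, q.1, q.2) | p <- ocmul a, q <- ocmul p.2].
Proof.
move=> P F hF; rewrite !big_allpairs_dep /ocmul !big_map /=.
under eq_bigr do rewrite big_map /=.
under [RHS]eq_bigr do rewrite big_map /=.
have hG : ktrilinear (fun u1 u2 u3 : A y x => F u3 u2 u1).
  by case: hF => h1 [h2 h3]; split; [|split] => ? ?; [exact: h3 | exact: h2 | exact: h1].
by have := coassoc_sum hG a => ->.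
Qed.

Lemma ocounitL x y (a : oA x y) : \sum_(p <- ocmul a) ocounit p.1 *: p.2 = a.
Proof. by rewrite /ocmul big_map /=; exact: counitR. Qed.
Lemma ocounitR x y (a : oA x y) : \sum_(p <- ocmul a) ocounit p.2 *: p.1 = a.
Proof. by rewrite /ocmul big_map /=; exact: counitL. Qed.

Lemma ocomp_cmul x y z (a : oA x y) (b : oA y z) :
  teq2 (ocmul (ocomp a b))
       [seq (ocomp p.1 q.1, ocomp p.2 q.2) | p <- ocmul a, q <- ocmul b].
Proof.
move=> P F hF; rewrite big_allpairs_dep /ocmul /ocomp !big_map /=.
rewrite (cmul_comp_sum (kbilinear_flip hF)) exchange_big /=.
by apply: eq_bigr => p _; rewrite big_map.
Qed.

Lemma ocomp_counit x y z (a : oA x y) (b : oA y z) :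
  ocounit (ocomp a b) = ocounit a * ocounit b.
Proof. by rewrite /ocounit /ocomp comp_counit mulrC. Qed.

Lemma oidm_cmul x : teq2 (ocmul (oidm x)) [:: (oidm x, oidm x)].
Proof.
move=> P F hF; rewrite /ocmul big_map big_seq1 /=.
exact: (cmul_idm_sum (kbilinear_flip hF)).
Qed.

Definition opcop : semiHopfCat k X :=
  @SemiHopfCat k X oA (@ocomp) oidm (@ocmul) (@ocounit) ocomp_bilin ocompA ocomp1m ocompm1
    ocmul_lin (fun x y => counit_lin _ _ C y x) ocoassoc ocounitL ocounitR ocomp_cmul
    ocomp_counit oidm_cmul (fun x => idm_counit _ _ C x).

Lemma opcop_Hopf : is_Hopf C -> is_Hopf opcop.
Proof.
move=> [s [hs [hsL hsR]]]; exists (fun x y (a : oA x y) => s y x a).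
split; first by move=> x y; exact: hs.
by split=> x y a /=; rewrite /ocmul big_map /=; [exact: hsR | exact: hsL].
Qed.

Lemma opcop_right T : left_integral opcop T -> right_integral C (fun x y => T y x).
Proof. by move=> h x y z a; exact: (h y x z a). Qed.

Lemma opcop_nonsingular T : nonsingular opcop T -> nonsingular C (fun x y => T y x).
Proof.
move=> [hl hr]; split=> x.
  have [g [h1 [h2 h3]]] := hr x; exists g; split=> //; split=> // a.
  by have := h3 a; rewrite /= /ocmul big_map.
have [g [h1 [h2 h3]]] := hl x; exists g; split=> //; split=> // a.
by have := h3 a; rewrite /= /ocmul big_map.
Qed.

End OppositeCoopposite.

Theorem mainTheorem10 (k : comPzRingType)
  (hk : forall M : lmodType k, fg_projective M -> free_fin M)
  (X : Type) (C : semiHopfCat k X)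
  (hfg : forall x y, fg_projective (Ahom C x y)) :
  [<-> (* (a) *) is_Hopf C /\ (exists t, right_integral C t /\ nonsingular C t);
       (* (b) *) (exists t, right_integral C t /\ nonsingular C t) /\
                 (exists t, left_integral C t /\ nonsingular C t);
       (* (c) *) is_Hopf C /\ is_Frobenius C;
       (* (d) *) is_Hopf C /\ (forall x, lint_iso_k C x);
       (* (e) *) (exists t, left_integral C t /\ right_nonsingular C t) /\ same_rank_cond C;
       (* (f) *) is_Hopf C].
Proof.
have left_family := Hopf_lint_family hk hfg.
(* The right-handed family comes from the left-handed one of A^{op,cop}. *)
have right_family : is_Hopf C -> exists t, right_integral C t /\ nonsingular C t.
  move=> hH; have [T [hT [hns _]]] :=
    Hopf_lint_family (C := opcop C) hk (fun x y => hfg y x) (opcop_Hopf hH).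
  by exists (fun x y => T y x); split; [exact: opcop_right | exact: opcop_nonsingular].
tfae.
- move=> [hH _]; split; first exact: right_family.
  by have [T [hT [hns _]]] := left_family hH; exists T.
- move=> [[t [ht [htl _]]] [t' [ht' [_ htr]]]].
  have hH := Hopf_of_integrals (ex_intro _ t (conj ht htl)) (ex_intro _ t' (conj ht' htr)).
  by have [T [_ [_ [hF _]]]] := left_family hH.
- by move=> [hH _]; have [T [_ [_ [_ hl]]]] := left_family hH.
- move=> [hH _]; split; last exact: (same_rank_of_Hopf hk hfg hH).
  by have [T [hT [[_ hr] _]]] := left_family hH; exists T.
- by move=> [he hsr]; exact: (Hopf_of_same_rank he hsr).
- by move=> hH; split=> //; exact: right_family.
Qed.
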